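(* Let $z\neq 0,1$ be a fixed complex constant. The function \[ F_0(k,a,b) = z^{b+k}(z-1)^{a-b}\,\frac{\Gamma(a+k)}{\Gamma(b+k)}\,\Gamma(b-a) \] is a WZ seed in the variables $a,b$.
   Context: A term $F(n_1,\dots,n_r)$ is hypergeometric in $n_1,\dots,n_r$ if each ratio $F(\dots,n_i+1,\dots)/F(\dots,n_i,\dots)$ is a rational function of $n_1,\dots,n_r$. Write $\Delta_n f(n)=f(n+1)-f(n)$. Two hypergeometric terms $F(n,k),G(n,k)$ form a WZ pair, and $G$ is called a WZ mate of $F$, if $\Delta_n F(n,k)=\Delta_k G(n,k)$. A hypergeometric term $F_0(k,a,b,\dots)$ (hypergeometric in $k,a,b,\dots$) is a WZ seed in the variables $a,b,\dots$ if for all integers $K,A,B,\dots$ and all complex $k_0$ and all values of the parameters $a,b,\dots$, the term $F(n,k)=F_0(Kn+k_0+k,\,An+a,\,Bn+b,\dots)$ has a WZ mate $G(n,k)$ (a hypergeometric term). Factors such as $(-1)^x$ or $z^x$ with non-integer exponent $x$ are understood as hypergeometric factors satisfying $(-1)^{x+1}=-(-1)^x$, $z^{x+1}=z\cdot z^x$ (e.g. defined via a fixed branch of the exponential). *)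

From Stdlib Require Import Reals ZArith ClassicalEpsilon.
From Coquelicot Require Import Coquelicot.

Local Open Scope C_scope.

Definition Cexp (w : C) : C :=
  RtoC (exp (Re w)) * (RtoC (cos (Im w)) + Ci * RtoC (sin (Im w))).

(** [cpow L x] = "z^x" for the fixed branch determined by a logarithm [L]
    of z (i.e. [Cexp L = z]); it satisfies z^(x+1) = z * z^x. *)
Definition cpow (L x : C) : C := Cexp (x * L).

Fixpoint csum (n : nat) (f : nat -> C) : C :=
  match n with O => 0 | S n => csum n f + f n end.

Fixpoint cpown (x : C) (n : nat) : C :=
  match n with O => 1 | S n => cpown x n * x end.

Fixpoint poch (s : C) (m : nat) : C :=
  match m with O => 1 | S m => poch s m * (s + RtoC (INR m)) end.

(** Gauss' product for the reciprocal Gamma function: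
    1/Gamma(s) = lim_{m -> oo} s(s+1)...(s+m) / (m! m^s). *)
Definition rgamma_approx (s : C) (m : nat) : C :=
  poch s (S m) / (RtoC (INR (fact m)) * Cexp (s * RtoC (ln (INR m)))).

Definition RGamma (s : C) : C :=
  epsilon (inhabits (RtoC 0))
    (fun L => filterlim (rgamma_approx s) eventually (locally L)).

(** The Gamma function: Gamma s = 1 / RGamma s (at the poles s = 0,-1,-2,...
    this returns Cinv 0 = 0, a junk value never used below). *)
Definition Gamma (s : C) : C := / RGamma s.

Definition not_pole (s : C) : Prop := forall m : nat, s <> - RtoC (INR m).

Record poly2 := Poly2 { deg2 : nat; coef2 : nat -> nat -> C }.
Definition peval2 (p : poly2) (x y : C) : C :=
  csum (S (deg2 p)) (fun i => csum (S (deg2 p)) (fun j =>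
    coef2 p i j * cpown x i * cpown y j)).
Definition pnonzero2 (p : poly2) : Prop :=
  exists i j, (i <= deg2 p)%nat /\ (j <= deg2 p)%nat /\ coef2 p i j <> 0.

Record poly3 := Poly3 { deg3 : nat; coef3 : nat -> nat -> nat -> C }.
Definition peval3 (p : poly3) (x y w : C) : C :=
  csum (S (deg3 p)) (fun i => csum (S (deg3 p)) (fun j => csum (S (deg3 p))
    (fun l => coef3 p i j l * cpown x i * cpown y j * cpown w l))).
Definition pnonzero3 (p : poly3) : Prop :=
  exists i j l, (i <= deg3 p)%nat /\ (j <= deg3 p)%nat /\ (l <= deg3 p)%nat
    /\ coef3 p i j l <> 0.

Definition ZC (n : Z) : C := RtoC (IZR n).

(** [G : Z -> Z -> C] is hypergeometric in n, k: each shift ratio is a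
    rational function P/Q (Q a nonzero polynomial), i.e.
    Q(n,k) G(n+1,k) = P(n,k) G(n,k) and likewise for k. *)
Definition hypergeometric2 (G : Z -> Z -> C) : Prop :=
  (exists P Q : poly2, pnonzero2 Q /\ forall n k : Z,
     peval2 Q (ZC n) (ZC k) * G (n + 1)%Z k = peval2 P (ZC n) (ZC k) * G n k)
  /\
  (exists P Q : poly2, pnonzero2 Q /\ forall n k : Z,
     peval2 Q (ZC n) (ZC k) * G n (k + 1)%Z = peval2 P (ZC n) (ZC k) * G n k).

Definition hypergeometric3 (D : C -> C -> C -> Prop) (F0 : C -> C -> C -> C)
  : Prop :=
  (exists P Q : poly3, pnonzero3 Q /\ forall k a b : C,
     D k a b -> D (k + 1) a b ->
     peval3 Q k a b * F0 (k + 1) a b = peval3 P k a b * F0 k a b)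
  /\
  (exists P Q : poly3, pnonzero3 Q /\ forall k a b : C,
     D k a b -> D k (a + 1) b ->
     peval3 Q k a b * F0 k (a + 1) b = peval3 P k a b * F0 k a b)
  /\
  (exists P Q : poly3, pnonzero3 Q /\ forall k a b : C,
     D k a b -> D k a (b + 1) ->
     peval3 Q k a b * F0 k a (b + 1) = peval3 P k a b * F0 k a b).

Definition WZ_pair (F G : Z -> Z -> C) : Prop :=
  hypergeometric2 F /\ hypergeometric2 G /\
  forall n k : Z, F (n + 1)%Z k - F n k = G n (k + 1)%Z - G n k.

Definition WZ_seed (D : C -> C -> C -> Prop) (F0 : C -> C -> C -> C) : Prop :=
  hypergeometric3 D F0 /\
  forall (K A B : Z) (k0 a b : C),
    (forall n k : Z, D (ZC K * ZC n + k0 + ZC k) (ZC A * ZC n + a) (ZC B * ZC n + b)) ->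
    exists G : Z -> Z -> C,
      WZ_pair (fun n k => F0 (ZC K * ZC n + k0 + ZC k) (ZC A * ZC n + a) (ZC B * ZC n + b)) G.

(** The seed of the theorem, for z with fixed logarithms Lz of z and
    Lw of z - 1:  F0(k,a,b) = z^(b+k) (z-1)^(a-b) Gamma(a+k)/Gamma(b+k) Gamma(b-a). *)
Definition F0_seed (Lz Lw : C) (k a b : C) : C :=
  cpow Lz (b + k) * cpow Lw (a - b) * (Gamma (a + k) / Gamma (b + k)) * Gamma (b - a).

(** Domain of F0_seed: the Gamma factors in the numerator are finite.
    (1/Gamma(b+k) is entire, so the denominator imposes no condition.) *)
Definition F0_seed_dom (k a b : C) : Prop := not_pole (a + k) /\ not_pole (b - a).

(* With X = a + k and W = b - a, the seed is
     F(X, W) = z^(X+W) (z-1)^(-W) Gamma(X) Gamma(W) / Gamma(X+W).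
   The functional equation Gamma(s+1) = s Gamma(s), obtained from the Gauss product for 1/Gamma
   (whose consecutive quotients are 1 + O(1/m^2)), makes every shift quotient of F rational, and
   gives F(X, W+1) - F(X, W) = -1/(z-1) (F(X+1, W) - F(X, W)): a difference in W is a difference
   in X, i.e. in k. Telescoping F(X + dX, W + dW) - F(X, W) first in X and then in W therefore
   writes Delta_n F as Delta_k of a finite sum of shifts of F with constant coefficients. That sum
   is a polynomial in (n, k) times a single hypergeometric base term, hence hypergeometric. *)

From Stdlib Require Import Reals ZArith Lra Lia Psatz ClassicalEpsilon Classical List.
From Coquelicot Require Import Coquelicot.

Local Open Scope C_scope.

(** * The functional equation of the Gamma function *)

Lemma Cexp_parts (w : C) :
  Cexp w = (exp (Re w) * cos (Im w), exp (Re w) * sin (Im w))%R.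
Proof.
  destruct w as [x y]; unfold Cexp, Re, Im, Cmult, Cplus, RtoC, Ci; simpl.
  f_equal; ring.
Qed.

Lemma Cexp_add (a b : C) : Cexp (a + b) = Cexp a * Cexp b.
Proof.
  rewrite !Cexp_parts. destruct a as [a1 a2], b as [b1 b2]; unfold Re, Im, Cmult; simpl.
  rewrite exp_plus, cos_plus, sin_plus. f_equal; ring.
Qed.

Lemma Cexp_0 : Cexp 0 = 1.
Proof.
  rewrite Cexp_parts; simpl. rewrite exp_0, cos_0, sin_0. unfold RtoC; f_equal; ring.
Qed.

Lemma Cexp_RtoC (r : R) : Cexp (RtoC r) = RtoC (exp r).
Proof.
  rewrite Cexp_parts. unfold Re, Im; simpl. rewrite cos_0, sin_0. unfold RtoC. f_equal; ring.
Qed.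

Lemma Cexp_mul_opp (w : C) : Cexp w * Cexp (- w) = 1.
Proof. rewrite <- Cexp_add. replace (w + - w) with (RtoC 0) by ring. apply Cexp_0. Qed.

Lemma Cexp_neq0 (w : C) : Cexp w <> 0.
Proof.
  intro H. pose proof (Cexp_mul_opp w) as E. rewrite H, Cmult_0_l in E.
  injection E; lra.
Qed.

Lemma Cexp_opp (w : C) : Cexp (- w) = / Cexp w.
Proof.
  pose proof (Cexp_mul_opp w) as E. pose proof (Cexp_neq0 w).
  field_simplify_eq; auto. rewrite <- E. ring.
Qed.

Lemma Cexp_nat_mul (L : C) (n : nat) : Cexp (RtoC (INR n) * L) = Cexp L ^ n.
Proof.
  induction n as [|n IH].
  - simpl. replace (RtoC 0 * L) with (RtoC 0) by ring. apply Cexp_0.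
  - rewrite S_INR, RtoC_plus, Cmult_plus_distr_r, Cmult_1_l, Cexp_add, IH, Cpow_S. ring.
Qed.

Lemma cpow_add_nat (L e : C) (n : nat) :
  cpow L (e + RtoC (INR n)) = cpow L e * Cexp L ^ n.
Proof.
  unfold cpow. rewrite Cmult_plus_distr_r, Cexp_add, Cexp_nat_mul. reflexivity.
Qed.

Lemma cpow_add1 (L e : C) : cpow L (e + 1) = cpow L e * Cexp L.
Proof.
  replace (e + 1) with (e + RtoC (INR 1)) by reflexivity.
  rewrite cpow_add_nat. simpl. ring.
Qed.

Lemma RtoC_neq0 (x : R) : x <> 0%R -> RtoC x <> 0.
Proof. intros H E. apply H. injection E; auto. Qed.

Lemma im_le_Cmod (c : C) : (Rabs (Im c) <= Cmod c)%R.
Proof.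
  destruct c as [x y]. pose proof (re_le_Cmod (y, x)) as H.
  unfold Cmod, Re, Im in *; simpl in *. rewrite Rplus_comm. exact H.
Qed.

Lemma Cmod_le_Rabs_Re_Im (w : C) : (Cmod w <= Rabs (Re w) + Rabs (Im w))%R.
Proof.
  destruct w as [x y]; unfold Cmod, Re, Im; simpl.
  pose proof (Rabs_pos x); pose proof (Rabs_pos y).
  rewrite <- (sqrt_Rsqr (Rabs x + Rabs y)) by lra.
  apply sqrt_le_1_alt. unfold Rsqr. rewrite !Rmult_1_r.
  assert (Rabs x * Rabs x = x * x)%R by (rewrite <- Rabs_mult; apply Rabs_pos_eq; nra).
  assert (Rabs y * Rabs y = y * y)%R by (rewrite <- Rabs_mult; apply Rabs_pos_eq; nra).
  nra.
Qed.

Lemma exp_quadratic_bound (x : R) : (Rabs x <= /2)%R ->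
  (Rabs (exp x - 1 - x) <= 2 * (x * x))%R /\ (exp x <= 2)%R.
Proof.
  intros Hx. apply Rabs_le_between in Hx.
  pose proof (exp_ineq1_le x). pose proof (exp_ineq1_le (- x)).
  assert (E : (exp x * exp (- x) = 1)%R)
    by (rewrite <- exp_plus, Rplus_opp_r; apply exp_0).
  pose proof (exp_pos x).
  (* exp (- x) >= 1 - x gives exp x * (1 - x) <= 1 <= (1 + x + 2 x^2) (1 - x) *)
  assert (exp x * (1 - x) <= 1)%R by nra.
  assert (exp x <= 1 + x + 2 * (x * x))%R by nra.
  split; [apply Rabs_le; split|]; nra.
Qed.

Lemma sin_cubic_bounds (t : R) : (0 <= t <= /2)%R -> (t - t * t * t / 6 <= sin t <= t)%R.
Proof.
  intros [H0 H1]. pose proof PI2_3_2.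
  destruct (sin_bound t 0 H0 ltac:(lra)) as [L U].
  unfold sin_approx, sin_term in *.
  cbn [sum_f_R0 Nat.mul Nat.add Factorial.fact pow] in *.
  replace (INR 1) with 1%R in * by reflexivity.
  replace (INR 6) with 6%R in * by (simpl; ring).
  replace (INR 120) with 120%R in * by (rewrite INR_IZR_INZ; reflexivity).
  assert (0 <= t * t * t)%R by (apply Rmult_le_pos; nra).
  assert (t * t <= 1)%R by nra.
  assert (t * t * t * t * t <= t * t * t)%R by nra.
  lra.
Qed.

Lemma sin_quadratic_bounds (y : R) : (Rabs y <= /2)%R ->
  (Rabs (sin y - y) <= y * y)%R /\ (Rabs (sin y) <= Rabs y)%R.
Proof.
  assert (Hpos : forall t, (0 <= t <= /2)%R ->
            (Rabs (sin t - t) <= t * t)%R /\ (Rabs (sin t) <= Rabs t)%R).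
  { intros t Ht. pose proof (sin_cubic_bounds t Ht).
    rewrite (Rabs_pos_eq t) by lra.
    split; apply Rabs_le; split; nra. }
  intros Hy. apply Rabs_le_between in Hy.
  destruct (Rle_dec 0 y); [apply Hpos; lra|].
  destruct (Hpos (- y)%R ltac:(lra)) as [H1 H2].
  rewrite sin_neg, Rabs_Ropp in H2.
  replace (sin (- y) - - y)%R with (- (sin y - y))%R in H1 by (rewrite sin_neg; ring).
  rewrite Rabs_Ropp in H1, H2. split; nra.
Qed.

Lemma cos_quadratic_bound (y : R) : (Rabs y <= /2)%R -> (Rabs (cos y - 1) <= y * y)%R.
Proof.
  intros Hy. apply Rabs_le_between in Hy. pose proof PI2_3_2.
  destruct (COS y ltac:(lra) ltac:(lra)) as [L U].
  unfold cos_lb, cos_approx, cos_term in *.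
  cbn [sum_f_R0 Nat.mul Nat.add Factorial.fact pow] in *.
  replace (INR 1) with 1%R in * by reflexivity.
  replace (INR 2) with 2%R in * by (simpl; ring).
  replace (INR 24) with 24%R in * by (rewrite INR_IZR_INZ; reflexivity).
  replace (INR 720) with 720%R in * by (rewrite INR_IZR_INZ; reflexivity).
  pose proof (COS_bound y).
  assert (0 <= y * y * y * y)%R by nra.
  assert (y * y * y * y * y * y <= y * y * y * y)%R by (assert (y * y <= 1)%R by nra; nra).
  apply Rabs_le; split; lra.
Qed.

Lemma Cexp_quadratic_remainder (w : C) : (Cmod w <= /2)%R ->
  (Cmod (Cexp w - 1 - w) <= 6 * (Cmod w * Cmod w))%R.
Proof.
  intros Hw.
  set (x := Re w). set (y := Im w). set (m := Cmod w).
  pose proof (re_le_Cmod w) as Hx. pose proof (im_le_Cmod w) as Hy. fold x y m in Hx, Hy, Hw.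
  destruct (exp_quadratic_bound x ltac:(lra)) as [E1 E2].
  destruct (sin_quadratic_bounds y ltac:(lra)) as [S1 S2].
  pose proof (cos_quadratic_bound y ltac:(lra)) as C1.
  pose proof (exp_pos x). pose proof (SIN_bound y).
  assert (Hsum : (x * x + y * y = m * m)%R)
    by (pose proof (Cmod2_alt w) as H2; fold x y m in H2; simpl in H2; lra).
  assert (Hre : Re (Cexp w - 1 - w) = ((exp x - 1 - x) + exp x * (cos y - 1))%R)
    by (unfold x, y; rewrite Cexp_parts; unfold Re, Im; simpl; ring).
  assert (Him : Im (Cexp w - 1 - w) = ((exp x - 1 - x) * sin y + x * sin y + (sin y - y))%R)
    by (unfold x, y; rewrite Cexp_parts; unfold Re, Im; simpl; ring).
  assert (B1 : (Rabs (Re (Cexp w - 1 - w)) <= 2 * (x * x) + 2 * (y * y))%R).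
  { rewrite Hre. eapply Rle_trans; [apply Rabs_triang|].
    rewrite Rabs_mult, (Rabs_pos_eq (exp x)) by lra.
    pose proof (Rabs_pos (cos y - 1)). nra. }
  assert (B2 : (Rabs (Im (Cexp w - 1 - w)) <= 2 * (x * x) + m * m + y * y)%R).
  { rewrite Him. eapply Rle_trans; [apply Rabs_triang|].
    eapply Rle_trans; [apply Rplus_le_compat_r, Rabs_triang|]. rewrite !Rabs_mult.
    assert (Rabs (sin y) <= 1)%R by (apply Rabs_le; lra).
    pose proof (Rabs_pos (exp x - 1 - x)). pose proof (Rabs_pos (sin y)).
    pose proof (Rabs_pos x). nra. }
  pose proof (Rle_0_sqr y). pose proof (Rle_0_sqr m). unfold Rsqr in *.
  eapply Rle_trans; [apply Cmod_le_Rabs_Re_Im|]. lra.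
Qed.

Lemma Cexp_sub1_bound (w : C) : (Cmod w <= /2)%R -> (Cmod (Cexp w - 1) <= 4 * Cmod w)%R.
Proof.
  intros Hw. pose proof (Cexp_quadratic_remainder w Hw). pose proof (Cmod_ge_0 w).
  replace (Cexp w - 1) with ((Cexp w - 1 - w) + w) by ring.
  eapply Rle_trans; [apply Cmod_triangle|]. nra.
Qed.

Lemma inv_sqr_le_inv_sub (m : R) : (2 <= m)%R -> (/ (m * m) <= / (m - 1) - / m)%R.
Proof.
  intros H. replace (/ (m - 1) - / m)%R with (/ ((m - 1) * m))%R by (field; lra).
  apply Rinv_le_contravar; nra.
Qed.

Lemma exp_le_exp_of_le (x y : R) : (x <= y)%R -> (exp x <= exp y)%R.
Proof.
  intros H. destruct (Rle_lt_or_eq_dec _ _ H) as [Hlt | ->]; [|lra].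
  apply Rlt_le, exp_increasing; auto.
Qed.

Lemma INR_ge2 (m : nat) : (2 <= m)%nat -> (2 <= INR m)%R.
Proof. intros H. apply (le_INR 2) in H. exact H. Qed.

Section ProductConvergence.

Variables (u e : nat -> C) (N : nat) (c : R).
Hypothesis HN : (2 <= N)%nat.
Hypothesis Hc : (0 <= c)%R.
Hypothesis Hstep : forall m, (N <= m)%nat -> u (S m) = u m * (1 + e m).
Hypothesis He : forall m, (N <= m)%nat -> (Cmod (e m) <= c / (INR m * INR m))%R.

Lemma Cmod_factor_le (m : nat) : (N <= m)%nat ->
  (Cmod (1 + e m) <= exp (c * (/ (INR m - 1) - / INR m)))%R.
Proof.
  intros Hm. pose proof (INR_ge2 m ltac:(lia)).
  eapply Rle_trans; [apply Cmod_triangle|]. rewrite Cmod_1.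
  eapply Rle_trans; [|apply exp_ineq1_le]. apply Rplus_le_compat_l.
  eapply Rle_trans; [apply He; lia|]. unfold Rdiv.
  apply Rmult_le_compat_l; auto. apply inv_sqr_le_inv_sub; auto.
Qed.

Lemma product_partial_bound (k : nat) :
  (Cmod (u (N + k)%nat) <= Cmod (u N) * exp (c * (/ (INR N - 1) - / (INR (N + k) - 1))))%R.
Proof.
  induction k as [|k IH].
  - rewrite Nat.add_0_r, Rminus_diag, Rmult_0_r, exp_0. lra.
  - replace (N + S k)%nat with (S (N + k)) by lia. rewrite Hstep, Cmod_mult by lia.
    set (m := (N + k)%nat) in *.
    rewrite S_INR. replace (INR m + 1 - 1)%R with (INR m) by ring.
    replace (c * (/ (INR N - 1) - / INR m))%R
      with (c * (/ (INR N - 1) - / (INR m - 1)) + c * (/ (INR m - 1) - / INR m))%R by ring.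
    rewrite exp_plus, <- Rmult_assoc.
    apply Rmult_le_compat; try apply Cmod_ge_0; auto.
    apply Cmod_factor_le. lia.
Qed.

Definition product_bound : R := (Cmod (u N) * exp (c * / (INR N - 1)))%R.

Lemma product_bound_mul_ge0 : (0 <= product_bound * c)%R.
Proof.
  apply Rmult_le_pos; auto. apply Rmult_le_pos; [apply Cmod_ge_0|apply Rlt_le, exp_pos].
Qed.

Lemma product_bounded (m : nat) : (N <= m)%nat -> (Cmod (u m) <= product_bound)%R.
Proof.
  intros Hm. replace m with (N + (m - N))%nat by lia.
  eapply Rle_trans; [apply product_partial_bound|]. unfold product_bound.
  apply Rmult_le_compat_l; [apply Cmod_ge_0|]. apply exp_le_exp_of_le.
  pose proof (INR_ge2 (N + (m - N)) ltac:(lia)).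
  assert (0 <= / (INR (N + (m - N)) - 1))%R by (apply Rlt_le, Rinv_0_lt_compat; lra).
  nra.
Qed.

Lemma product_cauchy (m k : nat) : (N <= m)%nat ->
  (Cmod (u (m + k)%nat - u m) <= product_bound * c * (/ (INR m - 1) - / (INR (m + k) - 1)))%R.
Proof.
  intros Hm. induction k as [|k IH].
  - rewrite Nat.add_0_r. replace (u m - u m) with (RtoC 0) by ring.
    rewrite Cmod_0, Rminus_diag. lra.
  - replace (m + S k)%nat with (S (m + k)) by lia.
    set (p := (m + k)%nat) in *.
    replace (u (S p) - u m) with ((u p - u m) + u p * e p) by (rewrite Hstep by lia; ring).
    eapply Rle_trans; [apply Cmod_triangle|]. rewrite Cmod_mult.
    pose proof (INR_ge2 p ltac:(lia)).
    pose proof (product_bounded p ltac:(lia)). pose proof (He p ltac:(lia)).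
    pose proof (Cmod_ge_0 (u p)). pose proof (Cmod_ge_0 (e p)).
    assert (Cmod (u p) * Cmod (e p) <= product_bound * (c / (INR p * INR p)))%R
      by (apply Rmult_le_compat; auto).
    assert (c / (INR p * INR p) <= c * (/ (INR p - 1) - / INR p))%R
      by (apply Rmult_le_compat_l; auto; apply inv_sqr_le_inv_sub; auto).
    assert (0 <= product_bound)%R by lra.
    rewrite S_INR. replace (INR p + 1 - 1)%R with (INR p) by ring.
    assert (product_bound * (c / (INR p * INR p))
              <= product_bound * (c * (/ (INR p - 1) - / INR p)))%R
      by (apply Rmult_le_compat_l; auto).
    nra.
Qed.

Lemma product_tail_bound (M a : nat) : (N <= M)%nat -> (M <= a)%nat ->
  (Cmod (u a - u M) <= product_bound * c / (INR M - 1))%R.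
Proof.
  intros HM Ha. replace a with (M + (a - M))%nat by lia.
  eapply Rle_trans; [apply product_cauchy; auto|].
  pose proof (INR_ge2 M ltac:(lia)). pose proof (le_INR _ _ Ha).
  replace (M + (a - M))%nat with a by lia.
  assert (0 <= / (INR a - 1))%R by (apply Rlt_le, Rinv_0_lt_compat; lra).
  pose proof product_bound_mul_ge0. unfold Rdiv. nra.
Qed.

Lemma product_converges : exists l, filterlim u eventually (locally l).
Proof.
  apply (filterlim_locally_cauchy
           (U := CompleteNormedModule.CompleteSpace _ C_CompleteNormedModule)).
  intros eps. pose proof (cond_pos eps) as Heps.
  pose proof product_bound_mul_ge0 as HB.
  destruct (INR_archimed 1 (2 * product_bound * c / eps + 1) ltac:(lra)) as [M0 HM0].
  set (M := (N + M0)%nat).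
  assert (HM : (2 * product_bound * c / eps < INR M - 1)%R)
    by (unfold M; rewrite plus_INR; pose proof (INR_ge2 N HN); lra).
  assert (Htail : (2 * (product_bound * c / (INR M - 1)) < eps)%R).
  { assert (0 < INR M - 1)%R by (pose proof (INR_ge2 M ltac:(unfold M; lia)); lra).
    apply (Rmult_lt_compat_r eps) in HM; auto.
    unfold Rdiv in *. rewrite Rmult_assoc, Rinv_l, Rmult_1_r in HM by lra.
    apply (Rmult_lt_reg_r (INR M - 1)); auto.
    rewrite Rmult_assoc, (Rmult_assoc _ (/ _)), Rinv_l by lra. lra. }
  exists (fun n => (M <= n)%nat). split; [exists M; auto|].
  intros a b Ha Hb. apply C_NormedModule_mixin_compat1.
  change (minus (u b) (u a)) with (u b - u a).
  replace (u b - u a) with ((u b - u M) - (u a - u M)) by ring.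
  eapply Rle_lt_trans; [apply Cmod_triangle|]. rewrite Cmod_opp.
  pose proof (product_tail_bound M a ltac:(unfold M; lia) Ha).
  pose proof (product_tail_bound M b ltac:(unfold M; lia) Hb).
  lra.
Qed.

End ProductConvergence.

Lemma Cexp_perturbation_bound (a w : C) (r m : R) :
  (0 < m)%R -> (2 * r <= m)%R -> (Cmod a * m <= r)%R -> (Cmod w * m <= r)%R ->
  (Cmod (a + w) * (m * m) <= r)%R ->
  (Cmod ((1 + a) * Cexp w - 1) * (m * m) <= r + 10 * (r * r))%R.
Proof.
  intros Hm Hr Ha Hw Haw.
  pose proof (Cmod_ge_0 a). pose proof (Cmod_ge_0 w).
  assert (Hw2 : (Cmod w <= /2)%R) by (apply (Rmult_le_reg_r m); lra).
  assert (Ha2 : (Cmod a <= /2)%R) by (apply (Rmult_le_reg_r m); lra).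
  pose proof (Cexp_quadratic_remainder w Hw2) as T.
  pose proof (Cmod_ge_0 (Cexp w - 1 - w)).
  assert (H1a : (Cmod (1 + a) <= 3 / 2)%R)
    by (eapply Rle_trans; [apply Cmod_triangle|]; rewrite Cmod_1; lra).
  pose proof (Cmod_ge_0 (1 + a)).
  replace ((1 + a) * Cexp w - 1) with ((a + w) + a * w + (1 + a) * (Cexp w - 1 - w)) by ring.
  assert (Hww : (Cmod w * m * (Cmod w * m) <= r * r)%R) by (apply Rmult_le_compat; nra).
  assert (Haw2 : (Cmod a * m * (Cmod w * m) <= r * r)%R) by (apply Rmult_le_compat; nra).
  assert (Hrem : (Cmod ((1 + a) * (Cexp w - 1 - w)) <= 3 / 2 * (6 * (Cmod w * Cmod w)))%R)
    by (rewrite Cmod_mult; apply Rmult_le_compat; auto).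
  assert (Hm2 : (0 < m * m)%R) by nra.
  eapply Rle_trans.
  { apply Rmult_le_compat_r; [lra|].
    eapply Rle_trans; [apply Cmod_triangle|].
    apply Rplus_le_compat_r, Cmod_triangle. }
  rewrite Cmod_mult. nra.
Qed.

Definition log_step (m : nat) : R := (ln (INR (S m)) - ln (INR m))%R.

Lemma log_step_bounds (m : nat) : (1 <= m)%nat ->
  (/ INR (S m) <= log_step m <= / INR m)%R.
Proof.
  intros Hm. apply (le_INR 1) in Hm. simpl in Hm. unfold log_step. rewrite S_INR.
  assert (Hlow : (ln (INR m / (INR m + 1)) <= - / (INR m + 1))%R).
  { rewrite <- (ln_exp (- / (INR m + 1))). apply ln_le; [apply Rdiv_lt_0_compat; lra|].
    replace (INR m / (INR m + 1))%R with (1 + - / (INR m + 1))%R by (field; lra).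
    apply exp_ineq1_le. }
  assert (Hup : (ln ((INR m + 1) / INR m) <= / INR m)%R).
  { rewrite <- (ln_exp (/ INR m)). apply ln_le; [apply Rdiv_lt_0_compat; lra|].
    replace ((INR m + 1) / INR m)%R with (1 + / INR m)%R by (field; lra).
    apply exp_ineq1_le. }
  rewrite ln_div in Hlow, Hup by lra. lra.
Qed.

Lemma Cmod_mul_log_step (s : C) (m : nat) : (1 <= m)%nat ->
  (Cmod (s * RtoC (log_step m)) * INR m <= Cmod s)%R.
Proof.
  intros Hm. pose proof (log_step_bounds m Hm) as [L1 L2].
  pose proof (le_INR _ _ Hm) as Hm'. simpl in Hm'. rewrite S_INR in L1.
  assert (0 < log_step m)%R by (eapply Rlt_le_trans; [|exact L1]; apply Rinv_0_lt_compat; lra).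
  rewrite Cmod_mult, Cmod_R, Rabs_pos_eq by lra. rewrite Rmult_assoc.
  pose proof (Cmod_ge_0 s).
  apply (Rmult_le_compat_r (INR m)) in L2; [|lra]. rewrite Rinv_l in L2 by lra. nra.
Qed.

Definition gauss_ratio_error (s : C) (m : nat) : C :=
  (1 + s / RtoC (INR (S m))) * Cexp (- (s * RtoC (log_step m))) - 1.

Lemma rgamma_approx_step (s : C) (m : nat) :
  rgamma_approx s (S m) = rgamma_approx s m * (1 + gauss_ratio_error s m).
Proof.
  unfold rgamma_approx, gauss_ratio_error.
  change (poch s (S (S m))) with (poch s (S m) * (s + RtoC (INR (S m)))).
  change (fact (S m)) with (S m * fact m)%nat.
  rewrite mult_INR, RtoC_mult.
  replace (s * RtoC (ln (INR (S m)))) with (s * RtoC (ln (INR m)) + s * RtoC (log_step m))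
    by (unfold log_step; rewrite RtoC_minus; ring).
  rewrite Cexp_add, Cexp_opp.
  pose proof (Cexp_neq0 (s * RtoC (ln (INR m)))). pose proof (Cexp_neq0 (s * RtoC (log_step m))).
  assert (RtoC (INR (S m)) <> 0) by (apply RtoC_neq0, not_0_INR; lia).
  assert (RtoC (INR (fact m)) <> 0) by (apply RtoC_neq0, INR_fact_neq_0).
  field. auto.
Qed.

Lemma gauss_ratio_error_bound (s : C) (m : nat) : (1 <= m)%nat -> (2 * Cmod s <= INR m)%R ->
  (Cmod (gauss_ratio_error s m) <= (Cmod s + 10 * (Cmod s * Cmod s)) / (INR m * INR m))%R.
Proof.
  intros Hm Hsm. pose proof (log_step_bounds m Hm) as [L1 L2].
  pose proof (le_INR _ _ Hm) as Hm'. simpl in Hm'. rewrite S_INR in L1.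
  pose proof (Cmod_ge_0 s).
  assert (Hm2 : (0 < INR m * INR m)%R) by nra.
  apply (Rmult_le_reg_r (INR m * INR m)); auto.
  unfold Rdiv. rewrite Rmult_assoc, Rinv_l, Rmult_1_r by lra.
  set (a := s * RtoC (/ (INR m + 1))).
  assert (Ha : s / RtoC (INR (S m)) = a)
    by (unfold a, Cdiv; rewrite S_INR, RtoC_inv; auto; lra).
  unfold gauss_ratio_error. rewrite Ha.
  apply Cexp_perturbation_bound; try lra.
  - unfold a. rewrite Cmod_mult, Cmod_R, Rabs_pos_eq by (apply Rlt_le, Rinv_0_lt_compat; lra).
    assert (/ (INR m + 1) * INR m <= 1)%R
      by (apply (Rmult_le_reg_r (INR m + 1)); [lra|];
          rewrite Rmult_assoc, (Rmult_comm (INR m)), <- Rmult_assoc, Rinv_l by lra; lra).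
    nra.
  - rewrite Cmod_opp. apply Cmod_mul_log_step; auto.
  - unfold a. replace (s * RtoC (/ (INR m + 1)) + - (s * RtoC (log_step m)))
      with (s * RtoC (/ (INR m + 1) - log_step m)) by (rewrite RtoC_minus; ring).
    rewrite Cmod_mult, Cmod_R, Rabs_left1 by lra.
    assert (/ INR m - / (INR m + 1) <= / (INR m * INR m))%R
      by (replace (/ INR m - / (INR m + 1))%R with (/ (INR m * (INR m + 1)))%R by (field; lra);
          apply Rinv_le_contravar; nra).
    assert (Hs : (Cmod s * (- (/ (INR m + 1) - log_step m)) <= Cmod s * / (INR m * INR m))%R)
      by (apply Rmult_le_compat_l; lra).
    apply (Rle_trans _ (Cmod s * / (INR m * INR m) * (INR m * INR m))).
    + apply Rmult_le_compat_r; lra.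
    + right. field. lra.
Qed.

Lemma rgamma_approx_converges (s : C) :
  exists l, filterlim (rgamma_approx s) eventually (locally l).
Proof.
  destruct (INR_archimed 1 (2 * Cmod s) ltac:(lra)) as [n Hn]. rewrite Rmult_1_r in Hn.
  apply (product_converges (rgamma_approx s) (gauss_ratio_error s) (n + 2)
           (Cmod s + 10 * (Cmod s * Cmod s))).
  - lia.
  - pose proof (Cmod_ge_0 s). nra.
  - intros m _. apply rgamma_approx_step.
  - intros m Hm. apply gauss_ratio_error_bound; [lia|].
    apply le_INR in Hm. rewrite plus_INR in Hm. simpl in Hm. pose proof (pos_INR n). lra.
Qed.

Lemma RGamma_spec (s : C) : filterlim (rgamma_approx s) eventually (locally (RGamma s)).
Proof.
  exact (epsilon_spec (inhabits (RtoC 0))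
           (fun L => filterlim (rgamma_approx s) eventually (locally L))
           (rgamma_approx_converges s)).
Qed.

(* Coquelicot puts two uniform structures on [C] (the product one, used by [RGamma], and the
   absolute-value one, used by its limit algebra); they have the same neighbourhoods. *)
Lemma filterlim_C_AbsRing {T} (F : (T -> Prop) -> Prop) (u : T -> C) (l : C) :
  filterlim u F (@locally C_UniformSpace l) ->
  filterlim u F (@locally (AbsRing_UniformSpace C_AbsRing) l).
Proof. intros H P HP. apply H. apply (proj2 (locally_C l P)). exact HP. Qed.

Lemma filterlim_C_UniformSpace {T} (F : (T -> Prop) -> Prop) (u : T -> C) (l : C) :
  filterlim u F (@locally (AbsRing_UniformSpace C_AbsRing) l) ->
  filterlim u F (@locally C_UniformSpace l).
Proof. intros H P HP. apply H. apply (proj1 (locally_C l P)). exact HP. Qed.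

Lemma filterlim_Cmult (u v : nat -> C) (l l' : C) :
  filterlim u eventually (locally l) -> filterlim v eventually (locally l') ->
  filterlim (fun m => u m * v m) eventually (locally (l * l')).
Proof.
  intros Hu Hv. apply filterlim_C_UniformSpace.
  exact (filterlim_comp_2 u v Cmult (filterlim_C_AbsRing _ _ _ Hu)
           (filterlim_C_AbsRing _ _ _ Hv) (filterlim_mult (K := C_AbsRing) l l')).
Qed.

Lemma filterlim_C_unique (u : nat -> C) (l l' : C) :
  filterlim u eventually (locally l) -> filterlim u eventually (locally l') -> l = l'.
Proof.
  exact (is_filter_lim_unique (K := C_AbsRing) (V := C_NormedModule)
           (F := filtermap u eventually) l l').
Qed.

Lemma filterlim_of_Cmod_le_inv (u : nat -> C) (l : C) (N : nat) (c : R) :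
  (forall m, (N <= m)%nat -> (Cmod (u m - l) <= c / INR m)%R) ->
  filterlim u eventually (locally l).
Proof.
  intros H. apply filterlim_locally. intros eps. pose proof (cond_pos eps).
  destruct (INR_archimed eps (Rabs c) (cond_pos eps)) as [M HM].
  exists (N + M + 1)%nat. intros m Hm. apply C_NormedModule_mixin_compat1.
  change (minus (u m) l) with (u m - l).
  pose proof (le_INR _ _ Hm) as Hm'. rewrite !plus_INR in Hm'. simpl in Hm'.
  pose proof (pos_INR N). pose proof (pos_INR M).
  eapply Rle_lt_trans; [apply H; lia|].
  apply (Rmult_lt_reg_r (INR m)); [lra|].
  unfold Rdiv. rewrite Rmult_assoc, Rinv_l, Rmult_1_r by lra.
  pose proof (Rle_abs c). nra.
Qed.

Definition gauss_shift_factor (s : C) (m : nat) : C :=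
  RtoC (INR (S m) / INR m) * Cexp (s * RtoC (log_step m)).

Lemma poch_S_shift (s : C) (n : nat) : poch s (S n) = s * poch (s + 1) n.
Proof.
  induction n as [|n IH]; [simpl; ring|].
  change (poch s (S (S n))) with (poch s (S n) * (s + RtoC (INR (S n)))).
  rewrite IH. change (poch (s + 1) (S n)) with (poch (s + 1) n * (s + 1 + RtoC (INR n))).
  rewrite S_INR, RtoC_plus. ring.
Qed.

Lemma rgamma_approx_shift (s : C) (m : nat) : (1 <= m)%nat ->
  s * rgamma_approx (s + 1) m = rgamma_approx s (S m) * gauss_shift_factor s m.
Proof.
  intros Hm. unfold rgamma_approx, gauss_shift_factor.
  rewrite (poch_S_shift s (S m)).
  change (fact (S m)) with (S m * fact m)%nat. rewrite mult_INR, RtoC_mult.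
  replace (s * RtoC (ln (INR (S m)))) with (s * RtoC (ln (INR m)) + s * RtoC (log_step m))
    by (unfold log_step; rewrite RtoC_minus; ring).
  replace ((s + 1) * RtoC (ln (INR m))) with (s * RtoC (ln (INR m)) + RtoC (ln (INR m))) by ring.
  rewrite !Cexp_add, Cexp_RtoC, exp_ln by (apply (lt_INR 0); lia).
  pose proof (Cexp_neq0 (s * RtoC (ln (INR m)))). pose proof (Cexp_neq0 (s * RtoC (log_step m))).
  assert (INR m <> 0%R) by (apply not_0_INR; lia).
  assert (RtoC (INR (S m)) <> 0) by (apply RtoC_neq0, not_0_INR; lia).
  assert (RtoC (INR (fact m)) <> 0) by (apply RtoC_neq0, INR_fact_neq_0).
  rewrite RtoC_div by auto. field. split; auto. apply RtoC_neq0; auto.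
Qed.

Lemma gauss_shift_factor_bound (s : C) (m : nat) : (1 <= m)%nat -> (2 * Cmod s <= INR m)%R ->
  (Cmod (gauss_shift_factor s m - 1) <= (3 + 4 * Cmod s) / INR m)%R.
Proof.
  intros Hm Hsm. pose proof (le_INR _ _ Hm) as Hm'. simpl in Hm'.
  set (w := s * RtoC (log_step m)).
  pose proof (Cmod_mul_log_step s m Hm) as Hw. fold w in Hw.
  assert (Hw2 : (Cmod w <= /2)%R) by (apply (Rmult_le_reg_r (INR m)); lra).
  pose proof (Cexp_sub1_bound w Hw2) as E.
  assert (CE : (Cmod (Cexp w) <= 3)%R).
  { replace (Cexp w) with ((Cexp w - 1) + 1) by ring.
    eapply Rle_trans; [apply Cmod_triangle|]. rewrite Cmod_1. lra. }
  unfold gauss_shift_factor. fold w.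
  replace (RtoC (INR (S m) / INR m) * Cexp w - 1) with (RtoC (/ INR m) * Cexp w + (Cexp w - 1))
    by (rewrite S_INR; replace ((INR m + 1) / INR m)%R with (1 + / INR m)%R by (field; lra);
        rewrite RtoC_plus; ring).
  eapply Rle_trans; [apply Cmod_triangle|].
  rewrite Cmod_mult, Cmod_R, Rabs_pos_eq by (apply Rlt_le, Rinv_0_lt_compat; lra).
  apply (Rmult_le_reg_r (INR m)); [lra|].
  unfold Rdiv. rewrite Rmult_assoc, Rinv_l, Rmult_1_r by lra.
  rewrite Rmult_plus_distr_r, (Rmult_comm (/ INR m)), Rmult_assoc, Rinv_l by lra.
  pose proof (Cmod_ge_0 w). nra.
Qed.

Lemma gauss_shift_factor_lim (s : C) :
  filterlim (gauss_shift_factor s) eventually (locally (RtoC 1)).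
Proof.
  destruct (INR_archimed 1 (2 * Cmod s) ltac:(lra)) as [n Hn]. rewrite Rmult_1_r in Hn.
  apply (filterlim_of_Cmod_le_inv _ _ (n + 1) (3 + 4 * Cmod s)).
  intros m Hm. apply gauss_shift_factor_bound; [lia|].
  apply le_INR in Hm. rewrite plus_INR in Hm. simpl in Hm. lra.
Qed.

Lemma RGamma_shift (s : C) : s * RGamma (s + 1) = RGamma s.
Proof.
  apply (filterlim_C_unique (fun m => s * rgamma_approx (s + 1) m)).
  - apply filterlim_Cmult; [apply filterlim_const|apply RGamma_spec].
  - rewrite <- (Cmult_1_r (RGamma s)).
    apply (filterlim_ext_loc (fun m => rgamma_approx s (S m) * gauss_shift_factor s m)).
    + exists 1%nat. intros m Hm. symmetry. apply rgamma_approx_shift. exact Hm.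
    + apply filterlim_Cmult; [|apply gauss_shift_factor_lim].
      eapply filterlim_comp; [|apply RGamma_spec]. apply eventually_subseq. intros; lia.
Qed.

Lemma Cinv_0 : / RtoC 0 = 0.
Proof. unfold Cinv; simpl. unfold RtoC. f_equal; unfold Rdiv; ring. Qed.

Lemma Cinv_inv (x : C) : / / x = x.
Proof.
  destruct (Ceq_dec x 0) as [-> | H]; [rewrite !Cinv_0; reflexivity|].
  field. auto.
Qed.

Lemma Gamma_shift (s : C) : s <> 0 -> Gamma (s + 1) = s * Gamma s.
Proof.
  intros Hs. unfold Gamma. rewrite <- (RGamma_shift s).
  destruct (Ceq_dec (RGamma (s + 1)) 0) as [-> | H].
  - rewrite Cmult_0_r, Cinv_0. ring.
  - field. auto.
Qed.

Lemma RGamma_add_nat (y : C) (n : nat) : RGamma y = poch y n * RGamma (y + RtoC (INR n)).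
Proof.
  induction n as [|n IH]; [simpl; rewrite Cplus_0_r; ring|].
  rewrite IH, <- (RGamma_shift (y + RtoC (INR n))), S_INR, RtoC_plus, Cplus_assoc. simpl. ring.
Qed.

Lemma Gamma_add_nat (x : C) (n : nat) : (forall j, (j < n)%nat -> x + RtoC (INR j) <> 0) ->
  Gamma (x + RtoC (INR n)) = poch x n * Gamma x.
Proof.
  induction n as [|n IH]; intros H; [simpl; rewrite Cplus_0_r; ring|].
  rewrite S_INR, RtoC_plus, Cplus_assoc, Gamma_shift, IH by (try apply H; intros; try apply H; lia).
  simpl. ring.
Qed.

(** * Polynomials in two variables *)

Lemma ZC_add (a b : Z) : ZC (a + b) = ZC a + ZC b.
Proof. unfold ZC. rewrite plus_IZR, RtoC_plus. reflexivity. Qed.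

Lemma ZC_mul (a b : Z) : ZC (a * b) = ZC a * ZC b.
Proof. unfold ZC. rewrite mult_IZR, RtoC_mult. reflexivity. Qed.

Lemma ZC_opp (a : Z) : ZC (- a) = - ZC a.
Proof. unfold ZC. rewrite opp_IZR, RtoC_opp. reflexivity. Qed.

Lemma ZC_sub (a b : Z) : ZC (a - b) = ZC a - ZC b.
Proof. unfold Z.sub. rewrite ZC_add, ZC_opp. reflexivity. Qed.

Lemma ZC_0 : ZC 0 = 0.
Proof. reflexivity. Qed.

Lemma ZC_1 : ZC 1 = 1.
Proof. reflexivity. Qed.

Lemma ZC_inj (a b : Z) : ZC a = ZC b -> a = b.
Proof. unfold ZC. intros H. injection H. apply eq_IZR. Qed.

Lemma ZC_of_nat (m : nat) : ZC (Z.of_nat m) = RtoC (INR m).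
Proof. unfold ZC. rewrite INR_IZR_INZ. reflexivity. Qed.

Lemma ZC_to_nat (v : Z) : (0 <= v)%Z -> RtoC (INR (Z.to_nat v)) = ZC v.
Proof. intros H. rewrite <- ZC_of_nat, Z2Nat.id by exact H. reflexivity. Qed.

Lemma not_pole_neq_ZC (s : C) (v : Z) : not_pole s -> (v <= 0)%Z -> s <> ZC v.
Proof.
  intros H Hv E. apply (H (Z.to_nat (- v))).
  rewrite E, ZC_to_nat, ZC_opp by lia. ring.
Qed.

Lemma not_pole_neq0 (s : C) : not_pole s -> s <> 0.
Proof. intros H E. apply (H 0%nat). rewrite E, INR_0. ring. Qed.

Lemma csum_ext (n : nat) (f g : nat -> C) :
  (forall i, (i < n)%nat -> f i = g i) -> csum n f = csum n g.
Proof.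
  induction n as [|n IH]; intros H; simpl; [reflexivity|].
  rewrite IH, (H n) by (try intros; try apply H; lia). reflexivity.
Qed.

Lemma csum_add (n : nat) (f g : nat -> C) : csum n (fun i => f i + g i) = csum n f + csum n g.
Proof. induction n as [|n IH]; simpl; [ring|]. rewrite IH. ring. Qed.

Lemma csum_zero (n : nat) (f : nat -> C) : (forall i, (i < n)%nat -> f i = 0) -> csum n f = 0.
Proof.
  intros H. rewrite (csum_ext n f (fun _ => 0)) by auto. clear H.
  induction n as [|n IH]; simpl; [reflexivity|]. rewrite IH. ring.
Qed.

Lemma csum_indicator (n a : nat) (f : nat -> C) : (a < n)%nat ->
  csum n (fun i => if Nat.eqb a i then f i else 0) = f a.
Proof.
  induction n as [|n IH]; intros Ha; [lia|]. simpl.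
  destruct (Nat.eqb_spec a n) as [-> | Hne].
  - rewrite csum_zero; [ring|]. intros i Hi. destruct (Nat.eqb_spec n i); [lia|reflexivity].
  - rewrite IH by lia. ring.
Qed.

Lemma csum_succ_shift (n : nat) (f : nat -> C) : csum (S n) f = f 0%nat + csum n (fun i => f (S i)).
Proof. induction n as [|n IH]; simpl; [ring|]. simpl in IH. rewrite IH. ring. Qed.

Lemma csum_mul_l (n : nat) (c : C) (f : nat -> C) : c * csum n f = csum n (fun i => c * f i).
Proof. induction n as [|n IH]; simpl; [ring|]. rewrite <- IH. ring. Qed.

Lemma cpown_add (x : C) (i j : nat) : cpown x (i + j) = cpown x i * cpown x j.
Proof.
  induction j as [|j IH]; [rewrite Nat.add_0_r; simpl; ring|].
  rewrite Nat.add_succ_r. simpl. rewrite IH. ring.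
Qed.

(* Polynomials are built as expressions and only then converted to the coefficient form
   [poly2] required by [hypergeometric2]. *)
Inductive pexpr : Type :=
  | PC (c : C) | PX | PY | PAdd (p q : pexpr) | PMul (p q : pexpr).

Fixpoint pexpr_eval (e : pexpr) (x y : C) : C :=
  match e with
  | PC c => c
  | PX => x
  | PY => y
  | PAdd p q => pexpr_eval p x y + pexpr_eval q x y
  | PMul p q => pexpr_eval p x y * pexpr_eval q x y
  end.

Fixpoint pexpr_shiftX (e : pexpr) : pexpr :=
  match e with
  | PX => PAdd PX (PC 1)
  | PAdd p q => PAdd (pexpr_shiftX p) (pexpr_shiftX q)
  | PMul p q => PMul (pexpr_shiftX p) (pexpr_shiftX q)
  | e => e
  end.

Fixpoint pexpr_shiftY (e : pexpr) : pexpr :=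
  match e with
  | PY => PAdd PY (PC 1)
  | PAdd p q => PAdd (pexpr_shiftY p) (pexpr_shiftY q)
  | PMul p q => PMul (pexpr_shiftY p) (pexpr_shiftY q)
  | e => e
  end.

Lemma pexpr_eval_shiftX (e : pexpr) (x y : C) :
  pexpr_eval (pexpr_shiftX e) x y = pexpr_eval e (x + 1) y.
Proof. induction e; simpl; try rewrite IHe1, IHe2; reflexivity. Qed.

Lemma pexpr_eval_shiftY (e : pexpr) (x y : C) :
  pexpr_eval (pexpr_shiftY e) x y = pexpr_eval e x (y + 1).
Proof. induction e; simpl; try rewrite IHe1, IHe2; reflexivity. Qed.

Definition monomial : Type := (C * nat * nat)%type.

Definition monomial_eval (m : monomial) (x y : C) : C :=
  let '(c, i, j) := m in c * cpown x i * cpown y j.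

Fixpoint monomials_eval (L : list monomial) (x y : C) : C :=
  match L with nil => 0 | m :: L' => monomial_eval m x y + monomials_eval L' x y end.

Definition monomial_mul (m1 m2 : monomial) : monomial :=
  let '(c1, i1, j1) := m1 in let '(c2, i2, j2) := m2 in (c1 * c2, (i1 + i2)%nat, (j1 + j2)%nat).

Fixpoint monomials (e : pexpr) : list monomial :=
  match e with
  | PC c => (c, 0%nat, 0%nat) :: nil
  | PX => (RtoC 1, 1%nat, 0%nat) :: nil
  | PY => (RtoC 1, 0%nat, 1%nat) :: nil
  | PAdd p q => monomials p ++ monomials q
  | PMul p q => flat_map (fun m1 => map (monomial_mul m1) (monomials q)) (monomials p)
  end.

Lemma monomials_eval_app (L1 L2 : list monomial) (x y : C) :
  monomials_eval (L1 ++ L2) x y = monomials_eval L1 x y + monomials_eval L2 x y.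
Proof. induction L1 as [|m L1 IH]; simpl; [|rewrite IH]; ring. Qed.

Lemma monomials_eval_mul (L1 L2 : list monomial) (x y : C) :
  monomials_eval (flat_map (fun m1 => map (monomial_mul m1) L2) L1) x y
  = monomials_eval L1 x y * monomials_eval L2 x y.
Proof.
  induction L1 as [|[[c1 i1] j1] L1 IH]; simpl; [ring|].
  rewrite monomials_eval_app, IH.
  enough (monomials_eval (map (monomial_mul (c1, i1, j1)) L2) x y
          = c1 * cpown x i1 * cpown y j1 * monomials_eval L2 x y) as -> by ring.
  clear IH. induction L2 as [|[[c2 i2] j2] L2 IH2]; simpl; [ring|].
  rewrite IH2, !cpown_add. ring.
Qed.

Lemma monomials_correct (e : pexpr) (x y : C) : monomials_eval (monomials e) x y = pexpr_eval e x y.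
Proof.
  induction e; simpl; try ring.
  - rewrite monomials_eval_app, IHe1, IHe2. reflexivity.
  - rewrite monomials_eval_mul, IHe1, IHe2. reflexivity.
Qed.

Fixpoint monomials_deg (L : list monomial) : nat :=
  match L with nil => 0%nat | (_, i, j) :: L' => Nat.max (Nat.max i j) (monomials_deg L') end.

Fixpoint monomials_coef (L : list monomial) (i j : nat) : C :=
  match L with
  | nil => 0
  | (c, a, b) :: L' => (if andb (Nat.eqb a i) (Nat.eqb b j) then c else 0) + monomials_coef L' i j
  end.

Lemma peval2_add_coef (D : nat) (f g : nat -> nat -> C) (x y : C) :
  peval2 (Poly2 D (fun i j => f i j + g i j)) x y = peval2 (Poly2 D f) x y + peval2 (Poly2 D g) x y.
Proof.
  unfold peval2; cbn [deg2 coef2]. rewrite <- csum_add. apply csum_ext. intros i _.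
  rewrite <- csum_add. apply csum_ext. intros j _. ring.
Qed.

Lemma peval2_single_coef (D a b : nat) (c x y : C) : (a <= D)%nat -> (b <= D)%nat ->
  peval2 (Poly2 D (fun i j => if andb (Nat.eqb a i) (Nat.eqb b j) then c else 0)) x y
  = c * cpown x a * cpown y b.
Proof.
  intros Ha Hb. unfold peval2; cbn [deg2 coef2].
  rewrite (csum_ext _ _ (fun i => if Nat.eqb a i then c * cpown x i * cpown y b else 0)).
  - apply csum_indicator. lia.
  - intros i _. destruct (Nat.eqb_spec a i) as [-> | Hne]; cbn [andb].
    + rewrite (csum_ext _ _ (fun j => if Nat.eqb b j then c * cpown x i * cpown y j else 0)).
      * apply csum_indicator. lia.
      * intros j _. destruct (Nat.eqb b j); ring.
    + apply csum_zero. intros; ring.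
Qed.

Lemma peval2_monomials_coef (L : list monomial) (D : nat) (x y : C) :
  (monomials_deg L <= D)%nat -> peval2 (Poly2 D (monomials_coef L)) x y = monomials_eval L x y.
Proof.
  induction L as [|[[c a] b] L IH]; intros H.
  - unfold peval2; cbn [deg2 coef2 monomials_coef monomials_eval].
    apply csum_zero. intros i _. apply csum_zero. intros j _. ring.
  - simpl in H. cbn [monomials_coef monomials_eval monomial_eval].
    rewrite (peval2_add_coef D (fun i j => if andb (Nat.eqb a i) (Nat.eqb b j) then c else 0)).
    rewrite peval2_single_coef, IH by lia. reflexivity.
Qed.

Definition poly2_of_pexpr (e : pexpr) : poly2 :=
  Poly2 (monomials_deg (monomials e)) (monomials_coef (monomials e)).

Lemma peval2_poly2_of_pexpr (e : pexpr) (x y : C) :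
  peval2 (poly2_of_pexpr e) x y = pexpr_eval e x y.
Proof. unfold poly2_of_pexpr. rewrite peval2_monomials_coef by lia. apply monomials_correct. Qed.

Lemma pnonzero2_of_peval2 (p : poly2) (x y : C) : peval2 p x y <> 0 -> pnonzero2 p.
Proof.
  intros H. apply NNPP. intros Hz. apply H. unfold peval2.
  apply csum_zero. intros i Hi. apply csum_zero. intros j Hj.
  destruct (Ceq_dec (coef2 p i j) 0) as [-> | Hne]; [ring|].
  exfalso. apply Hz. exists i, j. repeat split; auto; lia.
Qed.

Definition upoly (d : nat) (c : nat -> C) (y : C) : C := csum (S d) (fun i => c i * cpown y i).

Lemma upoly_succ (d : nat) (c : nat -> C) (y : C) :
  upoly (S d) c y = c 0%nat + y * upoly d (fun i => c (S i)) y.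
Proof.
  unfold upoly. rewrite csum_succ_shift, csum_mul_l. f_equal.
  - cbn [cpown]. ring.
  - apply csum_ext. intros i _. cbn [cpown]. ring.
Qed.

Lemma upoly_factor_root (d : nat) (c : nat -> C) (r : C) :
  exists c', forall y, upoly (S d) c y = upoly (S d) c r + (y - r) * upoly d c' y.
Proof.
  revert c. induction d as [|d IH]; intros c.
  - exists (fun _ => c 1%nat). intros y. rewrite !upoly_succ. unfold upoly. simpl. ring.
  - destruct (IH (fun i => c (S i))) as [c' Hc'].
    exists (fun i => match i with O => upoly (S d) (fun i => c (S i)) r | S i' => c' i' end).
    intros y. rewrite (upoly_succ (S d) c y), (upoly_succ (S d) c r), (Hc' y), (upoly_succ d _ y).
    change (upoly d (fun i => c' i) y) with (upoly d c' y). ring.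
Qed.

Lemma upoly_zero_of_int_roots (d : nat) : forall (c : nat -> C) (Y0 : Z),
  (forall k, (Y0 <= k)%Z -> upoly d c (ZC k) = 0) -> forall y, upoly d c y = 0.
Proof.
  induction d as [|d IH]; intros c Y0 H y.
  - pose proof (H Y0 (Z.le_refl _)) as H0. unfold upoly in *. simpl in *.
    rewrite Cmult_1_r, Cplus_0_l in *. exact H0.
  - destruct (upoly_factor_root d c (ZC Y0)) as [c' Hc'].
    assert (Hr : upoly (S d) c (ZC Y0) = 0) by (apply H; lia).
    assert (Hq : forall y, upoly d c' y = 0).
    { apply (IH c' (Y0 + 1)%Z). intros k Hk.
      destruct (Ceq_dec (upoly d c' (ZC k)) 0) as [E|E]; [exact E|exfalso].
      pose proof (H k ltac:(lia)) as Hk0. rewrite Hc', Hr, Cplus_0_l in Hk0.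
      revert Hk0. apply Cmult_neq_0; [|exact E].
      apply Cminus_eq_contra. intros Ek. apply ZC_inj in Ek. lia. }
    rewrite Hc', Hr, Hq. ring.
Qed.

Fixpoint monomials_coef_y (L : list monomial) (x : C) (j : nat) : C :=
  match L with
  | nil => 0
  | (c, a, b) :: L' => (if Nat.eqb b j then c * cpown x a else 0) + monomials_coef_y L' x j
  end.

Lemma upoly_monomials_coef_y (L : list monomial) (D : nat) (x y : C) :
  (monomials_deg L <= D)%nat -> upoly D (monomials_coef_y L x) y = monomials_eval L x y.
Proof.
  induction L as [|[[c a] b] L IH]; intros H.
  - unfold upoly. apply csum_zero. intros; simpl; ring.
  - simpl in H. cbn [monomials_coef_y monomials_eval monomial_eval].
    rewrite <- IH by lia. unfold upoly.
    rewrite (csum_ext _ _ (fun i => (if Nat.eqb b i then c * cpown x a * cpown y i else 0)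
                                    + monomials_coef_y L x i * cpown y i))
      by (intros i _; destruct (Nat.eqb b i); ring).
    rewrite csum_add, csum_indicator by lia. ring.
Qed.

Lemma pexpr_nonzero_for_large_k (e : pexpr) (n0 k0 : Z) :
  pexpr_eval e (ZC n0) (ZC k0) <> 0 ->
  forall Y0, exists k, (Y0 <= k)%Z /\ pexpr_eval e (ZC n0) (ZC k) <> 0.
Proof.
  intros H Y0. apply NNPP. intros Hnone. apply H.
  set (L := monomials e).
  assert (Hup : forall y,
             pexpr_eval e (ZC n0) y = upoly (monomials_deg L) (monomials_coef_y L (ZC n0)) y)
    by (intros y; unfold L; rewrite upoly_monomials_coef_y, monomials_correct by lia; reflexivity).
  rewrite Hup. apply (upoly_zero_of_int_roots _ _ Y0). intros k Hk.
  rewrite <- Hup. apply NNPP. intros Hk'. apply Hnone. exists k. auto.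
Qed.

Definition nonzero_for_large_k (q : pexpr) : Prop :=
  forall n : Z, exists Y0 : Z, forall k, (Y0 <= k)%Z -> pexpr_eval q (ZC n) (ZC k) <> 0.

Lemma hypergeometric2_ext (F G : Z -> Z -> C) :
  (forall n k, F n k = G n k) -> hypergeometric2 G -> hypergeometric2 F.
Proof.
  intros H [[P [Q [HQ HR]]] [P' [Q' [HQ' HR']]]].
  split; [exists P, Q|exists P', Q']; split; auto; intros n k; rewrite !H; auto.
Qed.

(* If [f] vanishes on all integer points the product is zero and any ratio works;
   otherwise [f * q] is nonzero at some integer point with large [k]. *)
Lemma hypergeometric2_pexpr_mul (f : pexpr) (T : Z -> Z -> C) (qn pn qk pk : pexpr) :
  (forall n k, pexpr_eval qn (ZC n) (ZC k) * T (n + 1)%Z k = pexpr_eval pn (ZC n) (ZC k) * T n k) ->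
  nonzero_for_large_k qn ->
  (forall n k, pexpr_eval qk (ZC n) (ZC k) * T n (k + 1)%Z = pexpr_eval pk (ZC n) (ZC k) * T n k) ->
  nonzero_for_large_k qk ->
  hypergeometric2 (fun n k => pexpr_eval f (ZC n) (ZC k) * T n k).
Proof.
  intros Hn Nn Hk Nk.
  destruct (classic (exists n0 k0, pexpr_eval f (ZC n0) (ZC k0) <> 0)) as [[n0 [k0 Hf]]|Hz].
  - assert (Hnz : forall q, nonzero_for_large_k q -> pnonzero2 (poly2_of_pexpr (PMul f q))).
    { intros q Nq. destruct (Nq n0) as [Y0 HY].
      destruct (pexpr_nonzero_for_large_k f n0 k0 Hf Y0) as [k [Hk1 Hk2]].
      apply (pnonzero2_of_peval2 _ (ZC n0) (ZC k)). rewrite peval2_poly2_of_pexpr.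
      apply Cmult_neq_0; auto. }
    split.
    + exists (poly2_of_pexpr (PMul (pexpr_shiftX f) pn)), (poly2_of_pexpr (PMul f qn)).
      split; [apply Hnz, Nn|]. intros n k.
      rewrite !peval2_poly2_of_pexpr. simpl. rewrite pexpr_eval_shiftX, ZC_add, ZC_1.
      transitivity (pexpr_eval f (ZC n + 1) (ZC k)
                    * (pexpr_eval f (ZC n) (ZC k) * (pexpr_eval qn (ZC n) (ZC k) * T (n + 1)%Z k)));
        [ring|]. rewrite Hn. ring.
    + exists (poly2_of_pexpr (PMul (pexpr_shiftY f) pk)), (poly2_of_pexpr (PMul f qk)).
      split; [apply Hnz, Nk|]. intros n k.
      rewrite !peval2_poly2_of_pexpr. simpl. rewrite pexpr_eval_shiftY, ZC_add, ZC_1.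
      transitivity (pexpr_eval f (ZC n) (ZC k + 1)
                    * (pexpr_eval f (ZC n) (ZC k) * (pexpr_eval qk (ZC n) (ZC k) * T n (k + 1)%Z)));
        [ring|]. rewrite Hk. ring.
  - assert (Z0 : forall n k, pexpr_eval f (ZC n) (ZC k) = 0)
      by (intros n k; apply NNPP; intros H; apply Hz; exists n, k; auto).
    split; exists (poly2_of_pexpr (PC 0)), (poly2_of_pexpr (PC 1));
      (split; [apply (pnonzero2_of_peval2 _ 0 0); rewrite peval2_poly2_of_pexpr; apply C1_nz|]);
      intros n k; rewrite !peval2_poly2_of_pexpr; simpl; rewrite !Z0; ring.
Qed.

Definition zsum (r : list Z) (f : Z -> C) : C := fold_right (fun o acc => f o + acc) 0 r.

Lemma zsum_app (r1 r2 : list Z) (f : Z -> C) : zsum (r1 ++ r2) f = zsum r1 f + zsum r2 f.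
Proof. induction r1 as [|o r1 IH]; simpl; [|rewrite IH]; ring. Qed.

Lemma zsum_ext (r : list Z) (f g : Z -> C) : (forall o, In o r -> f o = g o) -> zsum r f = zsum r g.
Proof.
  induction r as [|o r IH]; intros H; simpl; [reflexivity|].
  f_equal; [apply H; left; reflexivity|apply IH; intros; apply H; right; auto].
Qed.

Lemma zsum_mul_l (r : list Z) (c : C) (f : Z -> C) : c * zsum r f = zsum r (fun o => c * f o).
Proof. induction r as [|o r IH]; simpl; [|rewrite <- IH]; ring. Qed.

Lemma zsum_sub (r : list Z) (f g : Z -> C) : zsum r (fun o => f o - g o) = zsum r f - zsum r g.
Proof. induction r as [|o r IH]; simpl; [|rewrite IH]; ring. Qed.

Lemma telescope_seq (h : Z -> C) (a : Z) (n : nat) :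
  h (a + Z.of_nat n)%Z - h a
  = zsum (map (fun i => a + Z.of_nat i)%Z (seq 0 n)) (fun o => h (o + 1)%Z - h o).
Proof.
  induction n as [|n IH].
  - simpl. rewrite Z.add_0_r. ring.
  - rewrite seq_S, map_app, zsum_app, <- IH. cbn [map zsum fold_right].
    rewrite Nat2Z.inj_succ, <- Z.add_1_r, Z.add_assoc, Nat.add_0_l. ring.
Qed.

(* [zrange d] lists the integers between 0 and d, the larger end excluded. *)
Definition zrange (d : Z) : list Z :=
  map (fun i => Z.min 0 d + Z.of_nat i)%Z (seq 0 (Z.abs_nat d)).

Definition zsign (d : Z) : C := if (0 <=? d)%Z then 1 else - (1).

Lemma telescope_zrange (h : Z -> C) (d : Z) :
  h d - h 0%Z = zsign d * zsum (zrange d) (fun o => h (o + 1)%Z - h o).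
Proof.
  unfold zrange, zsign. rewrite <- telescope_seq.
  destruct (Z.leb_spec 0 d).
  - rewrite Z.min_l, Zabs2Nat.id_abs, Z.abs_eq by lia. simpl. ring.
  - rewrite Z.min_r, Zabs2Nat.id_abs, Z.abs_neq by lia.
    replace (d + - d)%Z with 0%Z by lia. ring.
Qed.

Lemma in_zrange_bound (d o : Z) : In o (zrange d) -> (Z.abs o <= Z.abs d)%Z /\ (0 <= o + Z.abs d)%Z.
Proof.
  unfold zrange. rewrite in_map_iff. intros [i [<- Hi]]. apply in_seq in Hi.
  destruct Hi as [_ Hi]. apply inj_lt in Hi. rewrite Nat.add_0_l, Zabs2Nat.id_abs in Hi. lia.
Qed.

Fixpoint poch_pexpr (e : pexpr) (m : nat) : pexpr :=
  match m with
  | O => PC 1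
  | S m' => PMul (poch_pexpr e m') (PAdd e (PC (RtoC (INR m'))))
  end.

Lemma pexpr_eval_poch (e : pexpr) (m : nat) (x y : C) :
  pexpr_eval (poch_pexpr e m) x y = poch (pexpr_eval e x y) m.
Proof. induction m as [|m IH]; simpl; [|rewrite IH]; reflexivity. Qed.

Lemma poch_neq0 (s : C) (m : nat) : (forall j : nat, s + RtoC (INR j) <> 0) -> poch s m <> 0.
Proof. intros H. induction m as [|m IH]; simpl; [apply C1_nz|]. apply Cmult_neq_0; auto. Qed.

(* [den * f (s + d) = num * f s] for [f s = u ^ s] and [f = Gamma]; for [f = RGamma] the roles
   of the two Gamma polynomials are exchanged. *)
Definition pow_shift_den (d : Z) (u : C) : C := if (d <? 0)%Z then u ^ Z.to_nat (- d) else 1.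
Definition pow_shift_num (d : Z) (u : C) : C := if (d <? 0)%Z then 1 else u ^ Z.to_nat d.

Definition Gamma_shift_den (d : Z) (e : pexpr) : pexpr :=
  if (d <? 0)%Z then poch_pexpr (PAdd e (PC (ZC d))) (Z.to_nat (- d)) else PC 1.
Definition Gamma_shift_num (d : Z) (e : pexpr) : pexpr :=
  if (d <? 0)%Z then PC 1 else poch_pexpr e (Z.to_nat d).

Lemma cpow_shift_Z (L s : C) (d : Z) :
  pow_shift_den d (Cexp L) * cpow L (s + ZC d) = pow_shift_num d (Cexp L) * cpow L s.
Proof.
  unfold pow_shift_den, pow_shift_num. destruct (Z.ltb_spec d 0).
  - replace s with ((s + ZC d) + RtoC (INR (Z.to_nat (- d)))) at 2
      by (rewrite ZC_to_nat, ZC_opp by lia; ring).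
    rewrite cpow_add_nat. ring.
  - rewrite <- (ZC_to_nat d), cpow_add_nat by lia. ring.
Qed.

Lemma Gamma_shift_Z (e : pexpr) (d : Z) (x y : C) :
  (forall j : Z, pexpr_eval e x y + ZC j <> 0) \/ d = 0%Z ->
  pexpr_eval (Gamma_shift_den d e) x y * Gamma (pexpr_eval e x y + ZC d)
  = pexpr_eval (Gamma_shift_num d e) x y * Gamma (pexpr_eval e x y).
Proof.
  intros H. unfold Gamma_shift_den, Gamma_shift_num. set (s := pexpr_eval e x y).
  destruct (Z.ltb_spec d 0); rewrite ?pexpr_eval_poch; cbn [pexpr_eval]; fold s.
  - destruct H as [H|H]; [|lia].
    replace s with ((s + ZC d) + RtoC (INR (Z.to_nat (- d)))) at 3
      by (rewrite ZC_to_nat, ZC_opp by lia; ring).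
    rewrite Gamma_add_nat; [ring|]. intros j _.
    rewrite <- ZC_of_nat, <- Cplus_assoc, <- ZC_add. apply H.
  - rewrite <- (ZC_to_nat d) by lia. rewrite Gamma_add_nat; [ring|].
    intros j Hj. rewrite <- ZC_of_nat. destruct H as [H|H]; [apply H|].
    subst. simpl in Hj. lia.
Qed.

Lemma RGamma_shift_Z (e : pexpr) (d : Z) (x y : C) :
  pexpr_eval (Gamma_shift_num d e) x y * RGamma (pexpr_eval e x y + ZC d)
  = pexpr_eval (Gamma_shift_den d e) x y * RGamma (pexpr_eval e x y).
Proof.
  unfold Gamma_shift_den, Gamma_shift_num. set (s := pexpr_eval e x y).
  destruct (Z.ltb_spec d 0); rewrite ?pexpr_eval_poch; cbn [pexpr_eval]; fold s.
  - rewrite (RGamma_add_nat (s + ZC d) (Z.to_nat (- d))), ZC_to_nat, ZC_opp by lia.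
    replace (s + ZC d + - ZC d) with s by ring. ring.
  - rewrite (RGamma_add_nat s (Z.to_nat d)), ZC_to_nat by lia. ring.
Qed.

Lemma nonzero_for_large_k_mul (p q : pexpr) :
  nonzero_for_large_k p -> nonzero_for_large_k q -> nonzero_for_large_k (PMul p q).
Proof.
  intros Hp Hq n. destruct (Hp n) as [Y1 H1], (Hq n) as [Y2 H2].
  exists (Z.max Y1 Y2). intros k Hk. apply Cmult_neq_0; [apply H1|apply H2]; lia.
Qed.

Lemma nonzero_for_large_k_all (p : pexpr) :
  (forall n k, pexpr_eval p (ZC n) (ZC k) <> 0) -> nonzero_for_large_k p.
Proof. intros H n. exists 0%Z. intros k _. apply H. Qed.

Lemma nonzero_for_large_k_poch (e : pexpr) (m : nat) (g : Z -> C) :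
  (forall n k, pexpr_eval e (ZC n) (ZC k) = ZC k + g n) -> nonzero_for_large_k (poch_pexpr e m).
Proof.
  intros He n. exists (up (Cmod (g n))). intros k Hk.
  rewrite pexpr_eval_poch, He. apply poch_neq0. intros j E.
  apply (f_equal Re) in E. unfold ZC in E. simpl in E. pose proof (pos_INR j).
  destruct (archimed (Cmod (g n))) as [A _]. apply IZR_le in Hk.
  pose proof (re_le_Cmod (g n)) as Hg. apply Rabs_le_between in Hg.
  unfold Re in *. lra.
Qed.

Definition lin_X (dX : Z) (Xc : C) : pexpr := PAdd (PAdd (PMul (PC (ZC dX)) PX) PY) (PC Xc).
Definition lin_W (dW : Z) (Wc : C) : pexpr := PAdd (PMul (PC (ZC dW)) PX) (PC Wc).

Lemma lin_X_succ_n (dX : Z) (Xc : C) (n k : Z) :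
  pexpr_eval (lin_X dX Xc) (ZC (n + 1)) (ZC k) = pexpr_eval (lin_X dX Xc) (ZC n) (ZC k) + ZC dX.
Proof. unfold lin_X. cbn [pexpr_eval]. rewrite ZC_add, ZC_1. ring. Qed.

Lemma lin_X_succ_k (dX : Z) (Xc : C) (n k : Z) :
  pexpr_eval (lin_X dX Xc) (ZC n) (ZC (k + 1)) = pexpr_eval (lin_X dX Xc) (ZC n) (ZC k) + 1.
Proof. unfold lin_X. cbn [pexpr_eval]. rewrite ZC_add, ZC_1. ring. Qed.

Lemma lin_W_succ_n (dW : Z) (Wc : C) (n : Z) (y : C) :
  pexpr_eval (lin_W dW Wc) (ZC (n + 1)) y = pexpr_eval (lin_W dW Wc) (ZC n) y + ZC dW.
Proof. unfold lin_W. cbn [pexpr_eval]. rewrite ZC_add, ZC_1. ring. Qed.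

Lemma lin_W_indep_y (dW : Z) (Wc : C) (x y y' : C) :
  pexpr_eval (lin_W dW Wc) x y = pexpr_eval (lin_W dW Wc) x y'.
Proof. reflexivity. Qed.

Lemma not_pole_progression (d : Z) (c : C) : d <> 0%Z ->
  (forall n : Z, not_pole (ZC d * ZC n + c)) -> forall n j : Z, ZC d * ZC n + c + ZC j <> 0.
Proof.
  intros Hd Hp n j E.
  set (u := (d * n + j)%Z).
  assert (Hc : c = ZC (- u)).
  { unfold u. rewrite ZC_opp, ZC_add, ZC_mul.
    replace c with (ZC d * ZC n + c + ZC j - ZC d * ZC n - ZC j) by ring. rewrite E. ring. }
  (* [c] is then an integer, so some term of the progression is a nonpositive integer *)
  set (n' := if (0 <=? u)%Z then 0%Z else (u * d)%Z).
  apply (not_pole_neq_ZC _ (d * n' - u) (Hp n')).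
  - unfold n'. destruct (Z.leb_spec 0 u); [lia|]. assert (1 <= d * d)%Z by nia. nia.
  - rewrite Hc, ZC_sub, ZC_mul, ZC_opp. ring.
Qed.

(** * The seed and the WZ mate *)

Definition poly3_linear (c0 ck ca cb : C) : poly3 :=
  Poly3 1%nat (fun i j l => match i, j, l with
    | O, O, O => c0 | S O, O, O => ck | O, S O, O => ca | O, O, S O => cb | _, _, _ => 0 end).

Lemma peval3_poly3_linear (c0 ck ca cb k a b : C) :
  peval3 (poly3_linear c0 ck ca cb) k a b = c0 + ck * k + ca * a + cb * b.
Proof. unfold peval3, poly3_linear. cbn [csum cpown deg3 coef3]. ring. Qed.

Lemma pnonzero3_poly3_linear_k (c0 ck ca cb : C) : ck <> 0 -> pnonzero3 (poly3_linear c0 ck ca cb).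
Proof. intros H. exists 1%nat, 0%nat, 0%nat. cbn. repeat split; auto. Qed.

Lemma pnonzero3_poly3_linear_b (c0 ck ca cb : C) : cb <> 0 -> pnonzero3 (poly3_linear c0 ck ca cb).
Proof. intros H. exists 0%nat, 0%nat, 1%nat. cbn. repeat split; auto. Qed.

Section SeedCore.

Variables (z Lz Lw : C).
Hypothesis hz0 : z <> 0.
Hypothesis hz1 : z <> 1.
Hypothesis hLz : Cexp Lz = z.
Hypothesis hLw : Cexp Lw = z - 1.

Lemma z_sub1_neq0 : z - 1 <> 0.
Proof. apply Cminus_eq_contra. exact hz1. Qed.

Definition seed_core (X W : C) : C :=
  cpow Lz (X + W) * cpow Lw (- W) * Gamma X * RGamma (X + W) * Gamma W.

Lemma F0_seed_core (k a b : C) : F0_seed Lz Lw k a b = seed_core (a + k) (b - a).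
Proof.
  unfold F0_seed, seed_core, Cdiv, Gamma at 2. rewrite Cinv_inv.
  replace (a + k + (b - a)) with (b + k) by ring. replace (- (b - a)) with (a - b) by ring.
  ring.
Qed.

Lemma seed_core_shift_X (X W : C) : X <> 0 ->
  (X + W) * seed_core (X + 1) W = z * X * seed_core X W.
Proof.
  intros HX. unfold seed_core.
  replace (X + 1 + W) with (X + W + 1) by ring.
  rewrite cpow_add1, hLz, Gamma_shift, <- (RGamma_shift (X + W)) by auto. ring.
Qed.

Lemma seed_core_shift_W (X W : C) : W <> 0 ->
  (z - 1) * (X + W) * seed_core X (W + 1) = z * W * seed_core X W.
Proof.
  intros HW. unfold seed_core.
  replace (X + (W + 1)) with (X + W + 1) by ring.
  replace (- W) with (- (W + 1) + 1) by ring.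
  rewrite !cpow_add1, hLz, hLw, Gamma_shift, <- (RGamma_shift (X + W)) by auto. ring.
Qed.

Lemma seed_core_shift_XW (X V : C) : X <> 0 -> V <> 0 ->
  V * seed_core (X + 1) V = (z - 1) * X * seed_core X (V + 1).
Proof.
  intros HX HV. unfold seed_core.
  replace (X + 1 + V) with (X + (V + 1)) by ring.
  replace (- V) with (- (V + 1) + 1) by ring.
  rewrite cpow_add1, hLw, !Gamma_shift by auto. ring.
Qed.

Lemma seed_hypergeometric : hypergeometric3 F0_seed_dom (F0_seed Lz Lw).
Proof.
  split; [|split].
  - exists (poly3_linear 0 z z 0), (poly3_linear 0 1 0 1).
    split; [apply pnonzero3_poly3_linear_k, C1_nz|].
    intros k a b [HX _] _. rewrite !peval3_poly3_linear, !F0_seed_core.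
    replace (a + (k + 1)) with (a + k + 1) by ring.
    replace (0 + 1 * k + 0 * a + 1 * b) with (a + k + (b - a)) by ring.
    rewrite seed_core_shift_X by (apply not_pole_neq0; auto). ring.
  - exists (poly3_linear 0 (z - 1) (z - 1) 0), (poly3_linear (-1) 0 (-1) 1).
    split; [apply pnonzero3_poly3_linear_b, C1_nz|].
    intros k a b [HX HW] [_ HV]. rewrite !peval3_poly3_linear, !F0_seed_core.
    replace (a + 1 + k) with (a + k + 1) by ring.
    replace (seed_core (a + k) (b - a)) with (seed_core (a + k) (b - (a + 1) + 1))
      by (f_equal; ring).
    replace (-1 + 0 * k + -1 * a + 1 * b) with (b - (a + 1)) by ring.
    rewrite seed_core_shift_XW by (apply not_pole_neq0; auto). ring.
  - exists (poly3_linear 0 0 (- z) z), (poly3_linear 0 (z - 1) 0 (z - 1)).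
    split; [apply pnonzero3_poly3_linear_b, z_sub1_neq0|].
    intros k a b [HX HW] _. rewrite !peval3_poly3_linear, !F0_seed_core.
    replace (b + 1 - a) with (b - a + 1) by ring.
    replace (0 + (z - 1) * k + 0 * a + (z - 1) * b) with ((z - 1) * (a + k + (b - a))) by ring.
    rewrite seed_core_shift_W by (apply not_pole_neq0; auto). ring.
Qed.

Definition dB : C := - / (z - 1).

Lemma seed_core_step_W (X W : C) : X <> 0 -> W <> 0 ->
  seed_core X (W + 1) - seed_core X W = dB * (seed_core (X + 1) W - seed_core X W).
Proof.
  intros HX HW. pose proof z_sub1_neq0. unfold seed_core, dB.
  replace (X + (W + 1)) with (X + W + 1) by ring. replace (X + 1 + W) with (X + W + 1) by ring.
  replace (- W) with (- (W + 1) + 1) by ring.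
  rewrite !cpow_add1, hLz, hLw, !Gamma_shift, <- (RGamma_shift (X + W)) by auto.
  field. auto.
Qed.

(* A term [(c, (t1, t3))] stands for [c * seed_core (X + t1) (W + t3)]. *)
Definition term : Type := (C * (Z * Z))%type.

Definition terms_eval (tl : list term) (X W : C) : C :=
  fold_right (fun t acc =>
    fst t * seed_core (X + ZC (fst (snd t))) (W + ZC (snd (snd t))) + acc) 0 tl.

Lemma terms_eval_cons (c : C) (t1 t3 : Z) (tl : list term) (X W : C) :
  terms_eval ((c, (t1, t3)) :: tl) X W = c * seed_core (X + ZC t1) (W + ZC t3) + terms_eval tl X W.
Proof. reflexivity. Qed.

Lemma terms_eval_app (tl1 tl2 : list term) (X W : C) :
  terms_eval (tl1 ++ tl2) X W = terms_eval tl1 X W + terms_eval tl2 X W.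
Proof. induction tl1 as [|t tl1 IH]; simpl; [|rewrite IH]; ring. Qed.

Lemma terms_eval_map (c : C) (r : list Z) (f : Z -> Z * Z) (X W : C) :
  terms_eval (map (fun o => (c, f o)) r) X W
  = c * zsum r (fun o => seed_core (X + ZC (fst (f o))) (W + ZC (snd (f o)))).
Proof. induction r as [|o r IH]; simpl; [|rewrite IH]; ring. Qed.

Definition mate_terms (dX dW : Z) : list term :=
  map (fun o => (zsign dX, (o, 0%Z))) (zrange dX)
  ++ map (fun o => (zsign dW * dB, (dX, o))) (zrange dW).

Lemma seed_core_telescope_X (dX : Z) (X W : C) :
  seed_core (X + ZC dX) W - seed_core X W
  = zsign dX * (zsum (zrange dX) (fun o => seed_core (X + 1 + ZC o) W)
                - zsum (zrange dX) (fun o => seed_core (X + ZC o) W)).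
Proof.
  rewrite <- zsum_sub.
  pose proof (telescope_zrange (fun o => seed_core (X + ZC o) W) dX) as T.
  cbn beta in T. rewrite ZC_0, Cplus_0_r in T. rewrite T. f_equal.
  apply zsum_ext. intros o _. rewrite ZC_add, ZC_1. f_equal. f_equal. ring.
Qed.

Lemma seed_core_telescope_W (dW : Z) (X W : C) :
  X <> 0 -> (forall o, In o (zrange dW) -> W + ZC o <> 0) ->
  seed_core X (W + ZC dW) - seed_core X W
  = zsign dW * dB * (zsum (zrange dW) (fun o => seed_core (X + 1) (W + ZC o))
                     - zsum (zrange dW) (fun o => seed_core X (W + ZC o))).
Proof.
  intros HX HW. rewrite <- zsum_sub, <- Cmult_assoc, zsum_mul_l.
  pose proof (telescope_zrange (fun o => seed_core X (W + ZC o)) dW) as T.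
  cbn beta in T. rewrite ZC_0, Cplus_0_r in T. rewrite T. f_equal.
  apply zsum_ext. intros o Ho. rewrite ZC_add, ZC_1, Cplus_assoc.
  apply seed_core_step_W; auto.
Qed.

Lemma mate_terms_spec (dX dW : Z) (X W : C) :
  X + ZC dX <> 0 -> (forall o, In o (zrange dW) -> W + ZC o <> 0) ->
  seed_core (X + ZC dX) (W + ZC dW) - seed_core X W
  = terms_eval (mate_terms dX dW) (X + 1) W - terms_eval (mate_terms dX dW) X W.
Proof.
  intros HX HW. unfold mate_terms. rewrite !terms_eval_app, !terms_eval_map. cbn [fst snd].
  rewrite ZC_0, !Cplus_0_r.
  transitivity ((seed_core (X + ZC dX) (W + ZC dW) - seed_core (X + ZC dX) W)
                + (seed_core (X + ZC dX) W - seed_core X W)); [ring|].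
  rewrite seed_core_telescope_W, seed_core_telescope_X by auto.
  replace (X + 1 + ZC dX) with (X + ZC dX + 1) by ring. ring.
Qed.

(* Every [seed_core (X + t1) (W + t3)] with [|t1| + |t3| <= M] is a polynomial multiple of
   [base_term M E X W] (see [base_E] for the choice of [E]). *)
Definition base_term (M E : Z) (X W : C) : C :=
  cpow Lz (X + W - ZC M) * cpow Lw (- W - ZC M) * Gamma (X - ZC M)
  * RGamma (X + W + ZC M) * Gamma (W - ZC E).

Definition offset_pexpr (M E t1 t3 : Z) (Xe We : pexpr) : pexpr :=
  PMul (PMul (PMul (PMul
    (PC (z ^ Z.to_nat (t1 + t3 + M))) (PC ((z - 1) ^ Z.to_nat (M - t3))))
    (poch_pexpr (PAdd Xe (PC (- ZC M))) (Z.to_nat (t1 + M))))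
    (poch_pexpr (PAdd (PAdd Xe We) (PC (ZC (t1 + t3)))) (Z.to_nat (M - t1 - t3))))
    (poch_pexpr (PAdd We (PC (- ZC E))) (Z.to_nat (t3 + E))).

Lemma seed_core_offset (M E t1 t3 : Z) (Xe We : pexpr) (x y : C) :
  (Z.abs t1 + Z.abs t3 <= M)%Z -> (0 <= t3 + E)%Z ->
  (forall j : Z, pexpr_eval Xe x y + ZC j <> 0) ->
  (forall j : nat, (j < Z.to_nat (t3 + E))%nat -> pexpr_eval We x y - ZC E + RtoC (INR j) <> 0) ->
  seed_core (pexpr_eval Xe x y + ZC t1) (pexpr_eval We x y + ZC t3)
  = pexpr_eval (offset_pexpr M E t1 t3 Xe We) x y
    * base_term M E (pexpr_eval Xe x y) (pexpr_eval We x y).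
Proof.
  intros Ht HE HX HW. unfold offset_pexpr, seed_core, base_term.
  cbn [pexpr_eval]. rewrite !pexpr_eval_poch. cbn [pexpr_eval].
  set (X := pexpr_eval Xe x y) in *. set (W := pexpr_eval We x y) in *.
  set (n1 := Z.to_nat (t1 + t3 + M)). set (n2 := Z.to_nat (M - t3)).
  set (n3 := Z.to_nat (t1 + M)). set (n4 := Z.to_nat (M - t1 - t3)).
  set (n5 := Z.to_nat (t3 + E)).
  assert (E1 : X + ZC t1 + (W + ZC t3) = X + W - ZC M + RtoC (INR n1))
    by (unfold n1; rewrite ZC_to_nat, !ZC_add by lia; ring).
  assert (E2 : - (W + ZC t3) = - W - ZC M + RtoC (INR n2))
    by (unfold n2; rewrite ZC_to_nat, ZC_sub by lia; ring).
  assert (E3 : X + ZC t1 = X + - ZC M + RtoC (INR n3))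
    by (unfold n3; rewrite ZC_to_nat, ZC_add by lia; ring).
  assert (E4 : X + W + ZC M = X + W + ZC (t1 + t3) + RtoC (INR n4))
    by (unfold n4; rewrite ZC_to_nat, !ZC_sub, ZC_add by lia; ring).
  assert (E5 : W + ZC t3 = W + - ZC E + RtoC (INR n5))
    by (unfold n5; rewrite ZC_to_nat, ZC_add by lia; ring).
  rewrite (RGamma_add_nat (X + ZC t1 + (W + ZC t3)) n4).
  replace (X + ZC t1 + (W + ZC t3) + RtoC (INR n4)) with (X + W + ZC M)
    by (rewrite E4, ZC_add; ring).
  replace (poch (X + ZC t1 + (W + ZC t3)) n4) with (poch (X + W + ZC (t1 + t3)) n4)
    by (f_equal; rewrite ZC_add; ring).
  rewrite E1, E2, E3, E5, !cpow_add_nat, hLz, hLw, !Gamma_add_nat; [unfold Cminus; ring| |].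
  - intros j Hj. apply (HW j Hj).
  - intros j _. replace (X + - ZC M + RtoC (INR j)) with (X + ZC (Z.of_nat j - M))
      by (rewrite ZC_sub, ZC_of_nat; ring). apply HX.
Qed.

Fixpoint terms_pexpr (M E : Z) (tl : list term) (Xe We : pexpr) : pexpr :=
  match tl with
  | nil => PC 0
  | (c, (t1, t3)) :: tl' =>
      PAdd (PMul (PC c) (offset_pexpr M E t1 t3 Xe We)) (terms_pexpr M E tl' Xe We)
  end.

Lemma terms_eval_pexpr (M E : Z) (tl : list term) (Xe We : pexpr) (x y : C) :
  (forall c t, In (c, t) tl -> (Z.abs (fst t) + Z.abs (snd t) <= M)%Z /\ (0 <= snd t + E)%Z /\
     forall j : nat, (j < Z.to_nat (snd t + E))%nat ->
       pexpr_eval We x y - ZC E + RtoC (INR j) <> 0) ->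
  (forall j : Z, pexpr_eval Xe x y + ZC j <> 0) ->
  terms_eval tl (pexpr_eval Xe x y) (pexpr_eval We x y)
  = pexpr_eval (terms_pexpr M E tl Xe We) x y
    * base_term M E (pexpr_eval Xe x y) (pexpr_eval We x y).
Proof.
  intros Ht HX. induction tl as [|[c [t1 t3]] tl IH]; [simpl; ring|].
  rewrite terms_eval_cons. cbn [terms_pexpr fst snd].
  destruct (Ht c (t1, t3) (or_introl eq_refl)) as [H1 [H2 H3]]. cbn [fst snd] in *.
  cbn [pexpr_eval].
  rewrite (seed_core_offset M E t1 t3), IH by (auto; intros; eapply Ht; right; eauto). ring.
Qed.

Definition base_shift_den (M E dX dW : Z) (Xe We : pexpr) : pexpr :=
  PMul (PMul (PMul (PMul
    (PC (pow_shift_den (dX + dW) z)) (PC (pow_shift_den (- dW) (z - 1))))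
    (Gamma_shift_den dX (PAdd Xe (PC (- ZC M)))))
    (Gamma_shift_num (dX + dW) (PAdd (PAdd Xe We) (PC (ZC M)))))
    (Gamma_shift_den dW (PAdd We (PC (- ZC E)))).

Definition base_shift_num (M E dX dW : Z) (Xe We : pexpr) : pexpr :=
  PMul (PMul (PMul (PMul
    (PC (pow_shift_num (dX + dW) z)) (PC (pow_shift_num (- dW) (z - 1))))
    (Gamma_shift_num dX (PAdd Xe (PC (- ZC M)))))
    (Gamma_shift_den (dX + dW) (PAdd (PAdd Xe We) (PC (ZC M)))))
    (Gamma_shift_num dW (PAdd We (PC (- ZC E)))).

Lemma base_term_shift (M E dX dW : Z) (Xe We : pexpr) (x y : C) :
  (forall j : Z, pexpr_eval Xe x y - ZC M + ZC j <> 0) ->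
  (forall j : Z, pexpr_eval We x y - ZC E + ZC j <> 0) \/ dW = 0%Z ->
  pexpr_eval (base_shift_den M E dX dW Xe We) x y
    * base_term M E (pexpr_eval Xe x y + ZC dX) (pexpr_eval We x y + ZC dW)
  = pexpr_eval (base_shift_num M E dX dW Xe We) x y
    * base_term M E (pexpr_eval Xe x y) (pexpr_eval We x y).
Proof.
  intros HX HW. unfold base_shift_den, base_shift_num, base_term. cbn [pexpr_eval].
  set (X := pexpr_eval Xe x y). set (W := pexpr_eval We x y).
  pose proof (cpow_shift_Z Lz (X + W - ZC M) (dX + dW)) as R1.
  pose proof (cpow_shift_Z Lw (- W - ZC M) (- dW)) as R2.
  pose proof (Gamma_shift_Z (PAdd Xe (PC (- ZC M))) dX x y (or_introl HX)) as R3.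
  pose proof (RGamma_shift_Z (PAdd (PAdd Xe We) (PC (ZC M))) (dX + dW) x y) as R4.
  pose proof (Gamma_shift_Z (PAdd We (PC (- ZC E))) dW x y HW) as R5.
  rewrite hLz in R1. rewrite hLw in R2. cbn [pexpr_eval] in R3, R4, R5. fold X W in R3, R4, R5.
  replace (X + ZC dX + (W + ZC dW) - ZC M) with (X + W - ZC M + ZC (dX + dW))
    by (rewrite ZC_add; ring).
  replace (- (W + ZC dW) - ZC M) with (- W - ZC M + ZC (- dW)) by (rewrite ZC_opp; ring).
  replace (X + ZC dX - ZC M) with (X + - ZC M + ZC dX) by ring.
  replace (X + ZC dX + (W + ZC dW) + ZC M) with (X + W + ZC M + ZC (dX + dW))
    by (rewrite ZC_add; ring).
  replace (W + ZC dW - ZC E) with (W + - ZC E + ZC dW) by ring.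
  change (X - ZC M) with (X + - ZC M). change (W - ZC E) with (W + - ZC E).
  set (D1 := pow_shift_den (dX + dW) z) in *. set (D2 := pow_shift_den (- dW) (z - 1)) in *.
  set (D3 := pexpr_eval (Gamma_shift_den dX (PAdd Xe (PC (- ZC M)))) x y) in *.
  set (D4 := pexpr_eval (Gamma_shift_num (dX + dW) (PAdd (PAdd Xe We) (PC (ZC M)))) x y) in *.
  set (D5 := pexpr_eval (Gamma_shift_den dW (PAdd We (PC (- ZC E)))) x y) in *.
  transitivity ((D1 * cpow Lz (X + W - ZC M + ZC (dX + dW)))
    * (D2 * cpow Lw (- W - ZC M + ZC (- dW)))
    * (D3 * Gamma (X + - ZC M + ZC dX)) * (D4 * RGamma (X + W + ZC M + ZC (dX + dW)))
    * (D5 * Gamma (W + - ZC E + ZC dW))); [ring|].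
  rewrite R1, R2, R3, R4, R5. ring.
Qed.

Lemma base_term_shift_X (M E : Z) (X W : C) : X - ZC M <> 0 ->
  (X + W + ZC M) * base_term M E (X + 1) W = z * (X - ZC M) * base_term M E X W.
Proof.
  intros HX. unfold base_term.
  replace (X + 1 + W - ZC M) with (X + W - ZC M + 1) by ring.
  replace (X + 1 - ZC M) with (X - ZC M + 1) by ring.
  replace (X + 1 + W + ZC M) with (X + W + ZC M + 1) by ring.
  rewrite cpow_add1, hLz, Gamma_shift, <- (RGamma_shift (X + W + ZC M)) by auto. ring.
Qed.

Lemma base_shift_den_nonzero (M E dX dW : Z) (Xc Wc : C) :
  (forall n k j : Z, pexpr_eval (lin_X dX Xc) (ZC n) (ZC k) + ZC j <> 0) ->
  (forall n j : Z, pexpr_eval (lin_W dW Wc) (ZC n) 0 + ZC j <> 0) \/ dW = 0%Z ->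
  nonzero_for_large_k (base_shift_den M E dX dW (lin_X dX Xc) (lin_W dW Wc)).
Proof.
  intros HX HW. pose proof hz0. pose proof z_sub1_neq0.
  unfold base_shift_den, Gamma_shift_den, Gamma_shift_num, lin_X, lin_W in *.
  cbn [pexpr_eval] in HX, HW.
  repeat apply nonzero_for_large_k_mul.
  - apply nonzero_for_large_k_all. intros n k. unfold pow_shift_den.
    destruct (_ <? 0)%Z; [apply Cpow_nz; auto|apply C1_nz].
  - apply nonzero_for_large_k_all. intros n k. unfold pow_shift_den.
    destruct (_ <? 0)%Z; [apply Cpow_nz; auto|apply C1_nz].
  - apply nonzero_for_large_k_all. intros n k.
    destruct (dX <? 0)%Z; [|apply C1_nz].
    rewrite pexpr_eval_poch. apply poch_neq0. intros j. cbn [pexpr_eval].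
    replace (_ + _ + _ + RtoC (INR j))
      with (ZC dX * ZC n + ZC k + Xc + ZC (dX - M + Z.of_nat j))
      by (rewrite ZC_add, ZC_sub, ZC_of_nat; ring).
    apply HX.
  - destruct (dX + dW <? 0)%Z; [apply nonzero_for_large_k_all; intros; apply C1_nz|].
    apply (nonzero_for_large_k_poch _ _ (fun n => ZC dX * ZC n + Xc + (ZC dW * ZC n + Wc) + ZC M)).
    intros n k. cbn [pexpr_eval]. ring.
  - apply nonzero_for_large_k_all. intros n k.
    destruct (dW <? 0)%Z eqn:Hd; [|apply C1_nz].
    destruct HW as [HW|HW]; [|subst; discriminate].
    rewrite pexpr_eval_poch. apply poch_neq0. intros j. cbn [pexpr_eval].
    replace (_ + _ + _ + RtoC (INR j))
      with (ZC dW * ZC n + Wc + ZC (dW - E + Z.of_nat j))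
      by (rewrite ZC_add, ZC_sub, ZC_of_nat; ring).
    apply HW.
Qed.

(* With [W] constant ([dW = 0]) only [t3 = 0] occurs and the last Gamma factor of the base
   is [Gamma W] itself; otherwise [W] avoids all integers and the base uses [Gamma (W - M)]. *)
Definition base_E (dW M : Z) : Z := if Z.eq_dec dW 0 then 0%Z else M.

Section Line.

Variables (dX dW : Z) (Xc Wc : C) (M : Z).
Hypothesis HX : forall n k j : Z, pexpr_eval (lin_X dX Xc) (ZC n) (ZC k) + ZC j <> 0.
Hypothesis HW : (forall n j : Z, pexpr_eval (lin_W dW Wc) (ZC n) 0 + ZC j <> 0) \/ dW = 0%Z.

Lemma lin_W_sub_base_E_neq0 (n : Z) :
  (forall j : Z, pexpr_eval (lin_W dW Wc) (ZC n) 0 - ZC (base_E dW M) + ZC j <> 0) \/ dW = 0%Z.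
Proof.
  destruct HW as [H|H]; [left|right; exact H]. intros j.
  replace (_ - _ + ZC j) with (pexpr_eval (lin_W dW Wc) (ZC n) 0 + ZC (j - base_E dW M))
    by (rewrite ZC_sub; ring).
  apply H.
Qed.

Lemma terms_eval_line (tl : list term) (n k : Z) :
  (forall c t, In (c, t) tl ->
     (Z.abs (fst t) + Z.abs (snd t) <= M)%Z /\ (dW = 0%Z -> snd t = 0%Z)) ->
  terms_eval tl (pexpr_eval (lin_X dX Xc) (ZC n) (ZC k)) (pexpr_eval (lin_W dW Wc) (ZC n) (ZC k))
  = pexpr_eval (terms_pexpr M (base_E dW M) tl (lin_X dX Xc) (lin_W dW Wc)) (ZC n) (ZC k)
    * base_term M (base_E dW M) (pexpr_eval (lin_X dX Xc) (ZC n) (ZC k))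
                                (pexpr_eval (lin_W dW Wc) (ZC n) (ZC k)).
Proof.
  intros Ht. apply terms_eval_pexpr; [|apply HX].
  intros c t Hin. destruct (Ht c t Hin) as [H1 H2].
  destruct (Z.eq_dec dW 0) as [H0|H0].
  - assert (HE : base_E dW M = 0%Z) by (unfold base_E; destruct (Z.eq_dec dW 0); congruence).
    rewrite HE, (H2 H0). split; [lia|split; [lia|]]. intros j Hj. simpl in Hj. lia.
  - assert (HE : base_E dW M = M) by (unfold base_E; destruct (Z.eq_dec dW 0); congruence).
    destruct (lin_W_sub_base_E_neq0 n) as [H|H]; [|contradiction].
    rewrite HE in *. split; [lia|split; [lia|]]. intros j _.
    rewrite (lin_W_indep_y _ _ _ _ 0), <- ZC_of_nat. apply H.
Qed.

Lemma terms_hypergeometric (tl : list term) :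
  (forall c t, In (c, t) tl ->
     (Z.abs (fst t) + Z.abs (snd t) <= M)%Z /\ (dW = 0%Z -> snd t = 0%Z)) ->
  hypergeometric2 (fun n k =>
    terms_eval tl (pexpr_eval (lin_X dX Xc) (ZC n) (ZC k))
                  (pexpr_eval (lin_W dW Wc) (ZC n) (ZC k))).
Proof.
  intros Ht.
  set (Xe := lin_X dX Xc). set (We := lin_W dW Wc). set (E := base_E dW M).
  apply (hypergeometric2_ext _ _ (fun n k => terms_eval_line tl n k Ht)).
  apply (hypergeometric2_pexpr_mul _ _
           (base_shift_den M E dX dW Xe We) (base_shift_num M E dX dW Xe We)
           (poch_pexpr (PAdd (PAdd Xe We) (PC (ZC M))) 1)
           (PMul (PC z) (PAdd Xe (PC (- ZC M))))).
  - intros n k. unfold Xe, We. rewrite lin_X_succ_n, lin_W_succ_n. fold Xe We.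
    apply base_term_shift.
    + intros j. replace (_ - ZC M + ZC j) with (pexpr_eval Xe (ZC n) (ZC k) + ZC (j - M))
        by (rewrite ZC_sub; ring). apply HX.
    + exact (lin_W_sub_base_E_neq0 n).
  - apply base_shift_den_nonzero; auto.
  - intros n k. rewrite pexpr_eval_poch. unfold Xe. rewrite lin_X_succ_k. fold Xe.
    rewrite (lin_W_indep_y _ _ _ (ZC (k + 1)) (ZC k)). fold We.
    cbn [pexpr_eval poch]. rewrite Cplus_0_r, Cmult_1_l.
    apply base_term_shift_X.
    replace (_ - ZC M) with (pexpr_eval Xe (ZC n) (ZC k) + ZC (- M)) by (rewrite ZC_opp; ring).
    apply HX.
  - apply (nonzero_for_large_k_poch _ _ (fun n => ZC dX * ZC n + Xc + (ZC dW * ZC n + Wc) + ZC M)).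
    intros n k. unfold Xe, We, lin_X, lin_W. cbn [pexpr_eval]. ring.
Qed.

End Line.

Section Progression.

Variables (K A B : Z) (k0 a b : C).

Let F (n k : Z) : C := F0_seed Lz Lw (ZC K * ZC n + k0 + ZC k) (ZC A * ZC n + a) (ZC B * ZC n + b).
Let X (n k : Z) : C := pexpr_eval (lin_X (A + K) (a + k0)) (ZC n) (ZC k).
Let W (n k : Z) : C := pexpr_eval (lin_W (B - A) (b - a)) (ZC n) (ZC k).

Hypothesis Hdom : forall n k : Z,
  F0_seed_dom (ZC K * ZC n + k0 + ZC k) (ZC A * ZC n + a) (ZC B * ZC n + b).

Lemma F_as_term (n k : Z) : F n k = terms_eval ((RtoC 1, (0, 0)%Z) :: nil) (X n k) (W n k).
Proof.
  unfold F, X, W. rewrite F0_seed_core. unfold lin_X, lin_W. cbn.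
  rewrite ZC_0, !Cplus_0_r, ZC_add, ZC_sub, Cmult_1_l. f_equal; ring.
Qed.

Lemma X_add_Z_neq0 (n k j : Z) : X n k + ZC j <> 0.
Proof.
  apply not_pole_neq0.
  replace (X n k + ZC j) with (ZC A * ZC n + a + (ZC K * ZC n + k0 + ZC (k + j)))
    by (unfold X, lin_X; cbn [pexpr_eval]; rewrite !ZC_add; ring).
  apply (Hdom n (k + j)%Z).
Qed.

Lemma W_add_Z_neq0 :
  (forall n j : Z, pexpr_eval (lin_W (B - A) (b - a)) (ZC n) 0 + ZC j <> 0) \/ (B - A)%Z = 0%Z.
Proof.
  destruct (Z.eq_dec (B - A) 0) as [H0|H0]; [right; exact H0|left].
  apply not_pole_progression; auto. intros n.
  replace (ZC (B - A) * ZC n + (b - a)) with (ZC B * ZC n + b - (ZC A * ZC n + a))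
    by (rewrite ZC_sub; ring).
  apply (Hdom n 0%Z).
Qed.

Lemma mate_terms_bound (c : C) (t : Z * Z) : In (c, t) (mate_terms (A + K) (B - A)) ->
  (Z.abs (fst t) + Z.abs (snd t) <= Z.abs (A + K) + Z.abs (B - A))%Z
  /\ ((B - A)%Z = 0%Z -> snd t = 0%Z).
Proof.
  unfold mate_terms. rewrite in_app_iff, !in_map_iff.
  intros [[o [Ho Hr]]|[o [Ho Hr]]]; injection Ho as <- <-;
    apply in_zrange_bound in Hr; cbn [fst snd]; lia.
Qed.

Lemma seed_WZ_mate : exists G : Z -> Z -> C, WZ_pair F G.
Proof.
  pose proof X_add_Z_neq0 as HX. pose proof W_add_Z_neq0 as HW.
  exists (fun n k => terms_eval (mate_terms (A + K) (B - A)) (X n k) (W n k)).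
  split; [|split].
  - apply (hypergeometric2_ext _ _ F_as_term), (terms_hypergeometric _ _ _ _ 0 HX HW).
    intros c t [Ht|[]]. injection Ht as <- <-. simpl. lia.
  - apply (terms_hypergeometric _ _ _ _ (Z.abs (A + K) + Z.abs (B - A)) HX HW), mate_terms_bound.
  - intros n k. rewrite !F_as_term. cbn [terms_eval fold_right fst snd].
    rewrite ZC_0, !Cplus_0_r, !Cmult_1_l.
    unfold X, W. rewrite lin_X_succ_n, lin_W_succ_n, lin_X_succ_k.
    rewrite (lin_W_indep_y _ _ _ (ZC (k + 1)) (ZC k)).
    apply mate_terms_spec; [apply HX|].
    intros o Ho. destruct HW as [HW'|HW']; [apply HW'|rewrite HW' in Ho; destruct Ho].
Qed.

End Progression.

End SeedCore.

Theorem theorem1 (z : C) (hz0 : z <> 0) (hz1 : z <> 1)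
  (Lz Lw : C) (hLz : Cexp Lz = z) (hLw : Cexp Lw = z - 1) :
  WZ_seed F0_seed_dom (F0_seed Lz Lw).
Proof.
  split.
  - exact (seed_hypergeometric z Lz Lw hz1 hLz hLw).
  - intros K A B k0 a b Hdom. exact (seed_WZ_mate z Lz Lw hz0 hz1 hLz hLw K A B k0 a b Hdom).
Qed.
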